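(* Assume $A_n$ satisfies (C1), the mean field condition $\lim_{n\to\infty}\frac1n\sum_{i,j=1}^nA_n(i,j)^2=0$, and the irregularity condition $$\liminf_{n\to\infty}\frac1n\sum_{i=1}^n\big(\mathcal R_n(i)-\overline{\mathcal R}_n\big)^2>0.$$ Then for every $(\beta,B)\in\Theta$, under $\mathbb P_{n,\beta,B}$ we have $T_n(\mathbf X)=\Theta_p(1)$. Consequently, with probability tending to one the pseudo-likelihood estimator exists and $(\hat\beta_n-\beta)^2+(\hat B_n-B)^2=O_p(1/n)$.
   Context: For each $n$, $A_n$ is a known symmetric $n\times n$ matrix with non-negative entries and zero diagonal. The Ising model is $\mathbb P_{n,\beta,B}(\mathbf X=\mathbf x)=Z_n(\beta,B)^{-1}\exp(\frac{\beta}{2}\mathbf x^\top A_n\mathbf x+B\sum_i x_i)$ on $\{-1,1\}^n$. (C1): there is a constant $\gamma<\infty$ with $\max_{i}\sum_{j}A_n(i,j)\le\gamma$ for all $n$. $\Theta=\{(\beta,B):\beta>0,B\ne0\}$. $\mathcal R_n(i)=\sum_{j=1}^nA_n(i,j)$ (row sums), $\overline{\mathcal R}_n=\frac1n\sum_i\mathcal R_n(i)$. $m_i(\mathbf x)=\sum_jA_n(i,j)x_j$, $\bar m(\mathbf x)=\frac1n\sum_i m_i(\mathbf x)$, $T_n(\mathbf x)=\frac1n\sum_i(m_i(\mathbf x)-\bar m(\mathbf x))^2$. The pseudo-likelihood estimator $(\hat\beta_n,\hat B_n)$ is the unique root in $\mathbb R^2$ of $\sum_i m_i(\mathbf x)(x_i-\tanh(\beta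 m_i(\mathbf x)+B))=0$, $\sum_i(x_i-\tanh(\beta m_i(\mathbf x)+B))=0$, when it exists. $U_n=O_p(V_n)$ means $U_n/V_n$ is tight; $U_n=\Theta_p(V_n)$ means $U_n=O_p(V_n)$ and $V_n=O_p(U_n)$. *)

From Stdlib Require Import Reals Lra List ClassicalEpsilon.
Open Scope R_scope.

(* A coupling sequence: A n i j is the (i,j) entry of the n x n matrix A_n,
   meaningful for i, j < n (0-based indices). *)
Definition coupling := nat -> nat -> nat -> R.

Definition rsum (n : nat) (f : nat -> R) : R :=
  fold_right (fun i acc => f i + acc) 0 (List.seq 0 n).

(* spin configurations: x : nat -> R, only x 0 .. x (n-1) matter *)
Definition upd (x : nat -> R) (k : nat) (v : R) : nat -> R :=
  fun i => if Nat.eqb i k then v else x i.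

(* list of all 2^n configurations in {-1,1}^n (coordinates >= n set to 0) *)
Fixpoint configs (n : nat) : list (nat -> R) :=
  match n with
  | O => (fun _ => 0) :: nil
  | S k => flat_map (fun x => upd x k 1 :: upd x k (-1) :: nil) (configs k)
  end.

Definition lsum {T} (l : list T) (f : T -> R) : R :=
  fold_right (fun t acc => f t + acc) 0 l.

Definition weight (A : coupling) (n : nat) (beta B : R) (x : nat -> R) : R :=
  exp (beta / 2 * rsum n (fun i => rsum n (fun j => A n i j * x i * x j))
       + B * rsum n (fun i => x i)).

Definition Zpart (A : coupling) (n : nat) (beta B : R) : R :=
  lsum (configs n) (weight A n beta B).

Definition ind (P : Prop) : R :=
  if excluded_middle_informative P then 1 else 0.

Definition Prob (A : coupling) (n : nat) (beta B : R) (E : (nat -> R) -> Prop) : R :=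
  lsum (configs n) (fun x => ind (E x) * weight A n beta B x) / Zpart A n beta B.

Definition rowsum (A : coupling) (n i : nat) : R := rsum n (fun j => A n i j).
Definition rowsum_mean (A : coupling) (n : nat) : R := rsum n (rowsum A n) / INR n.

Definition mloc (A : coupling) (n i : nat) (x : nat -> R) : R :=
  rsum n (fun j => A n i j * x j).
Definition mbar (A : coupling) (n : nat) (x : nat -> R) : R :=
  rsum n (fun i => mloc A n i x) / INR n.
Definition Tn (A : coupling) (n : nat) (x : nat -> R) : R :=
  rsum n (fun i => (mloc A n i x - mbar A n x) ^ 2) / INR n.

Definition PL_root (A : coupling) (n : nat) (x : nat -> R) (b c : R) : Prop :=
  rsum n (fun i => mloc A n i x * (x i - tanh (b * mloc A n i x + c))) = 0 /\
  rsum n (fun i => x i - tanh (b * mloc A n i x + c)) = 0.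

Definition is_PLE (A : coupling) (n : nat) (x : nat -> R) (b c : R) : Prop :=
  PL_root A n x b c /\ forall b' c', PL_root A n x b' c' -> b' = b /\ c' = c.

Definition PLE_exists (A : coupling) (n : nat) (x : nat -> R) : Prop :=
  exists b c, is_PLE A n x b c.

Definition valid_coupling (A : coupling) : Prop :=
  forall n i j, (i < n)%nat -> (j < n)%nat ->
    A n i j = A n j i /\ 0 <= A n i j /\ A n i i = 0.

Definition cond_C1 (A : coupling) : Prop :=
  exists gamma : R, forall n i, (i < n)%nat -> rowsum A n i <= gamma.

Definition mean_field (A : coupling) : Prop :=
  Un_cv (fun n => rsum n (fun i => rsum n (fun j => (A n i j) ^ 2)) / INR n) 0.

Definition irregular (A : coupling) : Prop :=
  exists c, 0 < c /\ exists N, forall n, (N <= n)%nat ->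
    c <= rsum n (fun i => (rowsum A n i - rowsum_mean A n) ^ 2) / INR n.

(* Given the other spins, [x j] has conditional mean [tanh (beta * m_j + B)].
   Pairing configurations that differ in one spin turns this into second
   moment bounds: the centred fields [S_i = sum_j A_ij (x_j - tanh (beta m_j + B))]
   have mean square O((1/n) sum_ij A_ij^2), which tends to 0, and both
   pseudo-likelihood scores at the true parameter have second moment O(n).

   Writing [m_i = tanh (beta mbar + B) R_n(i) + e_i + S_i], where [e_i] is
   controlled by [T_n], a small [T_n] forces either [tanh (beta mbar + B)] to
   be small, impossible when [B <> 0] since then [mbar] is small too, or the
   row sums to be nearly constant, contradicting irregularity.  So [T_n] is
   bounded below with high probability (and above by [gamma^2] always).

   When [T_n >= tau] and both scores are at most [n eps], the score map is
   strongly monotone on a box around [(beta, B)] ([tanh] has slope bounded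
   below on compacts, and [T_n] bounds the design from below), which gives a
   unique root within O(eps) by two applications of the intermediate value
   theorem; Chebyshev with [eps] of order [n^(-1/2)] gives the rate. *)

From Pilot Require Import Defs.
From Stdlib Require Import Reals Lra Lia List Psatz ClassicalEpsilon FunctionalExtensionality.
Import Defs.
Open Scope R_scope.

(** * Finite sums *)

Lemma rsum_S n f : rsum (S n) f = rsum n f + f n.
Proof.
  unfold rsum. rewrite seq_S, fold_right_app. simpl.
  generalize (f n). intros a.
  induction (seq 0 n) as [|h t IH]; simpl; [lra|]. rewrite IH. lra.
Qed.

Lemma rsum_ext n f g : (forall i, (i < n)%nat -> f i = g i) -> rsum n f = rsum n g.
Proof.
  induction n; intros H; [reflexivity|]. rewrite !rsum_S, IHn by (intros; apply H; lia).
  rewrite H by lia. reflexivity.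
Qed.

Lemma rsum_plus n f g : rsum n (fun i => f i + g i) = rsum n f + rsum n g.
Proof. induction n; [unfold rsum; simpl; lra|]. rewrite !rsum_S, IHn. lra. Qed.

Lemma rsum_minus n f g : rsum n (fun i => f i - g i) = rsum n f - rsum n g.
Proof. induction n; [unfold rsum; simpl; lra|]. rewrite !rsum_S, IHn. lra. Qed.

Lemma rsum_scal_l n c f : rsum n (fun i => c * f i) = c * rsum n f.
Proof. induction n; [unfold rsum; simpl; lra|]. rewrite !rsum_S, IHn. lra. Qed.

Lemma rsum_scal_r n c f : rsum n (fun i => f i * c) = rsum n f * c.
Proof. induction n; [unfold rsum; simpl; lra|]. rewrite !rsum_S, IHn. lra. Qed.

Lemma rsum_const n c : rsum n (fun _ => c) = INR n * c.
Proof. induction n; [unfold rsum; simpl; lra|]. rewrite rsum_S, IHn, S_INR. lra. Qed.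

Lemma rsum_le n f g : (forall i, (i < n)%nat -> f i <= g i) -> rsum n f <= rsum n g.
Proof.
  induction n; intros H; [unfold rsum; simpl; lra|]. rewrite !rsum_S.
  assert (rsum n f <= rsum n g) by (apply IHn; intros; apply H; lia).
  specialize (H n ltac:(lia)). lra.
Qed.

Lemma rsum_nonneg n f : (forall i, (i < n)%nat -> 0 <= f i) -> 0 <= rsum n f.
Proof.
  intros H. replace 0 with (rsum n (fun _ => 0)) by (rewrite rsum_const; lra).
  apply rsum_le; auto.
Qed.

Lemma rsum_abs n f : Rabs (rsum n f) <= rsum n (fun i => Rabs (f i)).
Proof.
  induction n; [unfold rsum; simpl; rewrite Rabs_R0; lra|]. rewrite !rsum_S.
  eapply Rle_trans; [apply Rabs_triang|]. lra.
Qed.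

Lemma rsum_abs_le n f M : (forall i, (i < n)%nat -> Rabs (f i) <= M) ->
  Rabs (rsum n f) <= INR n * M.
Proof.
  intros H. eapply Rle_trans; [apply rsum_abs|]. rewrite <- rsum_const. apply rsum_le. auto.
Qed.

Lemma rsum_delta n j a : (j < n)%nat ->
  rsum n (fun i => if Nat.eqb i j then a i else 0) = a j.
Proof.
  induction n; intros H; [lia|]. rewrite rsum_S.
  destruct (Nat.eq_dec j n).
  - subst. rewrite Nat.eqb_refl, (rsum_ext n _ (fun _ => 0)), rsum_const; [lra|].
    intros i Hi. destruct (Nat.eqb_spec i n); [lia|auto].
  - rewrite IHn by lia. destruct (Nat.eqb_spec n j); [lia|lra].
Qed.

Lemma rsum_swap n m f : rsum n (fun i => rsum m (fun j => f i j)) =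
  rsum m (fun j => rsum n (fun i => f i j)).
Proof.
  induction n.
  - unfold rsum at 1. simpl. rewrite (rsum_ext m _ (fun _ => 0)), rsum_const by reflexivity. lra.
  - rewrite rsum_S, IHn, <- rsum_plus. apply rsum_ext. intros. rewrite rsum_S. reflexivity.
Qed.

Lemma rsum_term_le n f j : (forall i, (i < n)%nat -> 0 <= f i) -> (j < n)%nat ->
  f j <= rsum n f.
Proof.
  intros H Hj. rewrite <- (rsum_delta n j f Hj). apply rsum_le.
  intros i Hi. destruct (Nat.eqb i j); auto; lra.
Qed.

Lemma rsum_eq0_nonneg n f : (forall i, (i < n)%nat -> 0 <= f i) -> rsum n f = 0 ->
  forall i, (i < n)%nat -> f i = 0.
Proof. intros H Hs i Hi. pose proof (rsum_term_le n f i H Hi). specialize (H i Hi). lra. Qed.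

Lemma rsum_sqr n (a : nat -> R) :
  (rsum n a)^2 = rsum n (fun j => rsum n (fun k => a j * a k)).
Proof.
  replace ((rsum n a)^2) with (rsum n a * rsum n a) by ring.
  rewrite <- rsum_scal_r. apply rsum_ext. intros j _. symmetry. apply rsum_scal_l.
Qed.

(* Minimising the nonnegative quadratic [sum_i a_i (b_i - lambda)^2] at
   [lambda = sum a b / sum a]. *)
Lemma rsum_cauchy_schwarz n a b : (forall i, (i < n)%nat -> 0 <= a i) ->
  (rsum n (fun i => a i * b i))^2 <= rsum n a * rsum n (fun i => a i * b i ^ 2).
Proof.
  intros Ha. set (s := rsum n a). set (t := rsum n (fun i => a i * b i)).
  set (q := rsum n (fun i => a i * b i ^ 2)).
  assert (Hs : 0 <= s) by (apply rsum_nonneg; auto).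
  destruct (Req_dec s 0) as [Hs0|Hs0].
  - assert (Ht : t = 0).
    { unfold t. rewrite (rsum_ext n _ (fun _ => 0)), rsum_const; [lra|].
      intros i Hi. pose proof (rsum_term_le n a i Ha Hi). specialize (Ha i Hi).
      fold s in H. replace (a i) with 0 by lra. ring. }
    rewrite Ht, Hs0. lra.
  - assert (Hp : 0 <= rsum n (fun i => a i * (b i - t / s) ^ 2)).
    { apply rsum_nonneg. intros i Hi. apply Rmult_le_pos; [auto|apply pow2_ge_0]. }
    rewrite (rsum_ext n _ (fun i => a i * b i ^ 2 + (-2 * (t/s)) * (a i * b i) + (t/s)^2 * a i))
      in Hp by (intros; ring).
    rewrite !rsum_plus, !rsum_scal_l in Hp. fold s t q in Hp.
    replace (q + -2 * (t / s) * t + (t / s) ^ 2 * s) with ((s * q - t ^ 2) / s) in Hp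
      by (field; auto).
    assert (0 <= s * q - t ^ 2); [|lra].
    replace (s * q - t ^ 2) with (s * ((s * q - t ^ 2) / s)) by (field; auto).
    apply Rmult_le_pos; lra.
Qed.

Lemma rsum_mean_sqr_le n f : (0 < n)%nat ->
  (rsum n f / INR n)^2 <= rsum n (fun i => f i ^ 2) / INR n.
Proof.
  intros Hn. assert (HN : 0 < INR n) by (apply lt_0_INR; lia).
  pose proof (rsum_cauchy_schwarz n (fun _ => 1) f ltac:(intros; lra)) as H.
  rewrite rsum_const, (rsum_ext n (fun i => 1 * f i) f),
    (rsum_ext n (fun i => 1 * f i ^ 2) (fun i => f i ^ 2)) in H by (intros; ring).
  replace ((rsum n f / INR n)^2) with ((rsum n f)^2 / INR n / INR n) by (field; lra).
  unfold Rdiv. apply Rmult_le_compat_r; [left; apply Rinv_0_lt_compat; lra|].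
  apply Rmult_le_reg_l with (INR n); [lra|].
  replace (INR n * ((rsum n f)^2 * / INR n)) with ((rsum n f)^2) by (field; lra). lra.
Qed.

Lemma rsum_var_le n v k : (0 < n)%nat ->
  rsum n (fun i => (v i - rsum n v / INR n) ^ 2) <= rsum n (fun i => (v i - k) ^ 2).
Proof.
  intros Hn. set (mu := rsum n v / INR n).
  assert (HN : 0 < INR n) by (apply lt_0_INR; lia).
  rewrite (rsum_ext n (fun i => (v i - k)^2)
     (fun i => (v i - mu)^2 + (2*(mu - k)) * v i + (k^2 - mu^2))) by (intros; ring).
  rewrite !rsum_plus, rsum_scal_l, rsum_const.
  replace (rsum n v) with (mu * INR n) by (unfold mu; field; lra).
  replace (2 * (mu - k) * (mu * INR n) + INR n * (k ^ 2 - mu ^ 2)) with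
    (INR n * (mu - k)^2) by ring.
  pose proof (pow2_ge_0 (mu - k)). nra.
Qed.

Lemma pow2_le_abs y k : Rabs y <= k -> y ^ 2 <= k ^ 2.
Proof.
  intros H. pose proof (Rabs_pos y). rewrite <- !Rsqr_pow2. apply Rsqr_le_abs_1.
  rewrite (Rabs_right k); lra.
Qed.

Lemma abs_lt_pow2 y k : 0 < k -> y ^ 2 < k ^ 2 -> Rabs y < k.
Proof.
  intros Hk H. destruct (Rlt_dec (Rabs y) k); auto.
  assert (k ^ 2 <= y ^ 2); [|lra].
  rewrite <- (pow2_abs y). apply pow2_le_abs. rewrite Rabs_right; lra.
Qed.

(** * The hyperbolic tangent *)

Lemma Rabs_le_bounds x K : Rabs x <= K -> -K <= x <= K.
Proof. unfold Rabs; destruct (Rcase_abs x); lra. Qed.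

Lemma tanh_exp y : tanh y = (exp (2*y) - 1) / (exp (2*y) + 1).
Proof.
  unfold tanh, sinh, cosh. replace (2*y) with (y + y) by ring.
  rewrite exp_plus, exp_Ropp. assert (0 < exp y) by apply exp_pos.
  field. split; [nra|lra].
Qed.

Lemma tanh_bound y : -1 < tanh y < 1.
Proof.
  rewrite tanh_exp. assert (0 < exp (2*y)) by apply exp_pos.
  replace ((exp (2*y) - 1) / (exp (2*y) + 1)) with (1 - 2 / (exp (2*y) + 1)) by (field; lra).
  assert (0 < 2 / (exp (2*y) + 1)) by (apply Rdiv_lt_0_compat; lra).
  assert (2 / (exp (2*y) + 1) < 2); [|lra].
  apply Rmult_lt_reg_r with (exp (2*y) + 1); [lra|].
  unfold Rdiv. rewrite Rmult_assoc, Rinv_l by lra. nra.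
Qed.

Lemma tanh_0 : tanh 0 = 0.
Proof. rewrite tanh_exp, Rmult_0_r, exp_0. field. Qed.

Lemma tanh_opp y : tanh (-y) = - tanh y.
Proof.
  unfold tanh, sinh, cosh. rewrite Ropp_involutive.
  assert (0 < exp y) by apply exp_pos. assert (0 < exp (-y)) by apply exp_pos.
  field. lra.
Qed.

Lemma tanh_sub a b : tanh a - tanh b =
  2 * (exp (2*a) - exp (2*b)) / ((exp (2*a) + 1) * (exp (2*b) + 1)).
Proof.
  rewrite !tanh_exp. assert (0 < exp (2*a)) by apply exp_pos.
  assert (0 < exp (2*b)) by apply exp_pos. field. lra.
Qed.

Lemma tanh_increasing a b : b < a -> tanh b < tanh a.
Proof.
  intros H. assert (0 < tanh a - tanh b); [|lra]. rewrite tanh_sub.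
  assert (exp (2*b) < exp (2*a)) by (apply exp_increasing; lra).
  assert (0 < exp (2*b)) by apply exp_pos.
  apply Rdiv_lt_0_compat; nra.
Qed.

Lemma tanh_le a b : b <= a -> tanh b <= tanh a.
Proof. intros H. destruct (Req_dec a b); [subst; lra|]. left; apply tanh_increasing; lra. Qed.

Lemma tanh_pos b : 0 < b -> 0 < tanh b.
Proof. intros H. pose proof (tanh_increasing b 0 H). rewrite tanh_0 in H0. lra. Qed.

Lemma tanh_abs_ge y b : 0 <= b -> b <= Rabs y -> tanh b <= Rabs (tanh y).
Proof.
  intros Hb H. destruct (Rle_dec 0 y).
  - rewrite Rabs_right in H by lra. pose proof (tanh_le y b H).
    pose proof (tanh_le y 0 r). rewrite tanh_0 in H1. rewrite Rabs_right; lra.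
  - rewrite Rabs_left in H by lra.
    replace (tanh y) with (- tanh (-y)) by (rewrite tanh_opp; ring). rewrite Rabs_Ropp.
    pose proof (tanh_le (-y) b H). pose proof (tanh_le (-y) 0 ltac:(lra)).
    rewrite tanh_0 in H1. rewrite Rabs_right; lra.
Qed.

Lemma tanh_sub_mul_nonneg a b : 0 <= (tanh a - tanh b) * (a - b).
Proof.
  destruct (Rtotal_order a b) as [H|[H|H]].
  - pose proof (tanh_increasing b a H). nra.
  - subst. lra.
  - pose proof (tanh_increasing a b H). nra.
Qed.

Lemma tanh_sub_mul_eq0 a b : (tanh a - tanh b) * (a - b) = 0 -> a = b.
Proof.
  intros H. destruct (Rtotal_order a b) as [H1|[H1|H1]]; auto.
  - pose proof (tanh_increasing b a H1). nra.
  - pose proof (tanh_increasing a b H1). nra.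
Qed.

Lemma tanh_lipschitz_le a b : b <= a -> tanh a - tanh b <= 4 * (a - b).
Proof.
  intros Hab. rewrite tanh_sub. set (p := exp (2*b)). set (q := exp (2*a)).
  set (E := exp (2*(a-b))).
  assert (Hp : 0 < p) by apply exp_pos. assert (HE0 : 0 < E) by apply exp_pos.
  assert (Hqp : q = p * E) by (unfold p, q, E; rewrite <- exp_plus; f_equal; ring).
  assert (He : 1 <= E) by (pose proof (exp_ineq1_le (2*(a-b))); unfold E; lra).
  assert (HE1 : (1 - 2*(a-b)) * E <= 1).
  { replace 1 with (exp (-(2*(a-b))) * E) at 2
      by (unfold E; rewrite <- exp_plus; replace (-(2*(a-b)) + 2*(a-b)) with 0 by ring; apply exp_0).
    apply Rmult_le_compat_r; [lra|]. pose proof (exp_ineq1_le (-(2*(a-b)))). lra. }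
  assert (H2 : q - p <= 2*(a-b) * q) by (rewrite Hqp; nra).
  apply Rle_trans with (2 * (q - p) / q).
  - unfold Rdiv. apply Rmult_le_compat_l; [rewrite Hqp; nra|]. apply Rinv_le_contravar; nra.
  - apply Rmult_le_reg_r with q; [nra|]. unfold Rdiv. rewrite Rmult_assoc, Rinv_l by nra. lra.
Qed.

Lemma tanh_lipschitz a b : Rabs (tanh a - tanh b) <= 4 * Rabs (a - b).
Proof.
  destruct (Rle_dec b a).
  - pose proof (tanh_lipschitz_le a b r). pose proof (tanh_le a b r).
    rewrite !Rabs_right by lra. lra.
  - pose proof (tanh_lipschitz_le b a ltac:(lra)). pose proof (tanh_le b a ltac:(lra)).
    rewrite Rabs_left1 by lra. rewrite Rabs_left by lra. lra.
Qed.

Lemma exp_le_exp a b : a <= b -> exp a <= exp b.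
Proof. intros H. destruct (Req_dec a b); [subst; lra|]. left; apply exp_increasing; lra. Qed.

(* A lower bound for the difference quotients of [tanh] on [[-K, K]]. *)
Definition tanh_slope_min (K : R) : R := 4 * exp (-(2*K)) / (exp (2*K) + 1)^2.

Lemma tanh_slope_min_pos K : 0 < tanh_slope_min K.
Proof.
  unfold tanh_slope_min. assert (0 < exp (-(2*K))) by apply exp_pos.
  assert (0 < exp (2*K)) by apply exp_pos. apply Rdiv_lt_0_compat; nra.
Qed.

Lemma tanh_slope_le K a b : Rabs a <= K -> Rabs b <= K -> b <= a ->
  tanh_slope_min K * (a - b) <= tanh a - tanh b.
Proof.
  intros Ha Hb Hab. rewrite tanh_sub. unfold tanh_slope_min.
  apply Rabs_le_bounds in Ha. apply Rabs_le_bounds in Hb.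
  set (p := exp (2*b)). set (q := exp (2*a)).
  set (E1 := exp (-(2*K))). set (E2 := exp (2*K)).
  assert (Hp : 0 < p) by apply exp_pos. assert (HE1 : 0 < E1) by apply exp_pos.
  assert (Hqp : 2*(a-b)*p <= q - p).
  { assert (q = p * exp (2*(a-b))) by (unfold p, q; rewrite <- exp_plus; f_equal; ring).
    pose proof (exp_ineq1_le (2*(a-b))). nra. }
  assert (HpK : E1 <= p) by (apply exp_le_exp; lra).
  assert (HqK : q <= E2) by (apply exp_le_exp; lra).
  assert (HpK2 : p <= E2) by (apply exp_le_exp; lra).
  assert (Hden : 0 < (q+1)*(p+1)) by (assert (0 < q) by apply exp_pos; nra).
  apply Rle_trans with ((4 * (a-b) * E1) * / ((q+1)*(p+1))).
  - replace (4 * E1 / (E2 + 1) ^ 2 * (a - b)) with ((4 * (a-b) * E1) * / ((E2+1)^2))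
      by (unfold Rdiv; ring).
    apply Rmult_le_compat_l; [nra|]. apply Rinv_le_contravar; [lra|].
    assert (0 < q) by apply exp_pos. nra.
  - unfold Rdiv. apply Rmult_le_compat_r; [left; apply Rinv_0_lt_compat; lra|nra].
Qed.

Lemma tanh_slope_mul K a b : Rabs a <= K -> Rabs b <= K ->
  tanh_slope_min K * (a - b)^2 <= (tanh a - tanh b) * (a - b).
Proof.
  intros Ha Hb. pose proof (tanh_slope_min_pos K). destruct (Rle_dec b a).
  - pose proof (tanh_slope_le K a b Ha Hb r). nra.
  - pose proof (tanh_slope_le K b a Hb Ha ltac:(lra)). nra.
Qed.

Lemma tanh_flip h : (1 - tanh h) * exp h + (-1 - tanh h) * exp (-h) = 0.
Proof.
  unfold tanh, sinh, cosh. assert (0 < exp h) by apply exp_pos.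
  assert (0 < exp (-h)) by apply exp_pos. field. lra.
Qed.

Lemma lipschitz_continuity (f : R -> R) L : 0 <= L ->
  (forall a b, Rabs (f a - f b) <= L * Rabs (a - b)) -> continuity f.
Proof.
  intros HL H x eps Heps. exists (eps / (L + 1)). split; [apply Rdiv_lt_0_compat; lra|].
  intros y [_ Hy]. simpl in *. unfold R_dist in *.
  eapply Rle_lt_trans; [apply H|].
  apply Rle_lt_trans with ((L+1) * Rabs (y - x)); [apply Rmult_le_compat_r; [apply Rabs_pos|lra]|].
  replace eps with ((L+1) * (eps / (L+1))) by (field; lra).
  apply Rmult_lt_compat_l; lra.
Qed.

(** * Single-spin flips and moment bounds *)

Definition spin (n : nat) (x : nat -> R) := forall i, (i < n)%nat -> x i = 1 \/ x i = -1.

Lemma configs_spin n x : In x (configs n) -> spin n x.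
Proof.
  revert x. induction n; intros x Hx i Hi; [lia|].
  simpl in Hx. apply in_flat_map in Hx. destruct Hx as [y [Hy Hx]].
  simpl in Hx. destruct Hx as [<-|[<-|[]]]; unfold upd;
  destruct (Nat.eqb_spec i n); auto; apply IHn; auto; lia.
Qed.

Lemma spin_upd n x j s : spin n x -> (s = 1 \/ s = -1) -> spin n (upd x j s).
Proof. intros H Hs i Hi. unfold upd. destruct (Nat.eqb i j); auto. Qed.

Lemma spin_abs n x i : spin n x -> (i < n)%nat -> Rabs (x i) = 1.
Proof. intros Hs Hi. destruct (Hs i Hi) as [-> | ->]; unfold Rabs; destruct Rcase_abs; lra. Qed.

Lemma upd_upd x j a b : upd (upd x j a) j b = upd x j b.
Proof. apply functional_extensionality. intros i. unfold upd. destruct (Nat.eqb i j); auto. Qed.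

Lemma upd_comm x j k a b : j <> k -> upd (upd x k a) j b = upd (upd x j b) k a.
Proof.
  intros H. apply functional_extensionality. intros i. unfold upd.
  destruct (Nat.eqb_spec i j), (Nat.eqb_spec i k); subst; auto. lia.
Qed.

Lemma upd_id x j : upd x j (x j) = x.
Proof.
  apply functional_extensionality. intros i. unfold upd.
  destruct (Nat.eqb_spec i j); subst; auto.
Qed.

Lemma upd_eq x j s : upd x j s j = s.
Proof. unfold upd. rewrite Nat.eqb_refl. auto. Qed.

Lemma upd_neq x j k s : k <> j -> upd x j s k = x k.
Proof. intros H. unfold upd. destruct (Nat.eqb_spec k j); [lia|auto]. Qed.

Lemma lsum_app {T} l1 l2 (f : T -> R) : lsum (l1 ++ l2) f = lsum l1 f + lsum l2 f.
Proof. induction l1; simpl; [unfold lsum; simpl; lra|]. unfold lsum in *. simpl. rewrite IHl1. lra. Qed.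

Lemma lsum_plus {T} l (f g : T -> R) : lsum l (fun x => f x + g x) = lsum l f + lsum l g.
Proof. induction l; unfold lsum in *; simpl; [lra|]. rewrite IHl. lra. Qed.

Lemma lsum_scal_l {T} l c (f : T -> R) : lsum l (fun x => c * f x) = c * lsum l f.
Proof. induction l; unfold lsum in *; simpl; [lra|]. rewrite IHl. lra. Qed.

Lemma lsum_ext {T} l (f g : T -> R) : (forall x, In x l -> f x = g x) -> lsum l f = lsum l g.
Proof.
  induction l; intros H; unfold lsum in *; simpl; [lra|].
  rewrite IHl, H; simpl; auto. intros; apply H; simpl; auto.
Qed.

Lemma lsum_zero {T} l : lsum l (fun _ : T => 0) = 0.
Proof. induction l; unfold lsum in *; simpl; [lra|]. rewrite IHl. lra. Qed.

Lemma lsum_le {T} l (f g : T -> R) : (forall x, In x l -> f x <= g x) -> lsum l f <= lsum l g.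
Proof.
  induction l; intros H; unfold lsum in *; simpl; [lra|].
  assert (f a <= g a) by (apply H; simpl; auto).
  assert (fold_right (fun t acc => f t + acc) 0 l <= fold_right (fun t acc => g t + acc) 0 l)
    by (apply IHl; intros; apply H; simpl; auto).
  lra.
Qed.

Lemma lsum_nonneg {T} l (f : T -> R) : (forall x, In x l -> 0 <= f x) -> 0 <= lsum l f.
Proof. intros H. rewrite <- (lsum_zero l). apply lsum_le; auto. Qed.

Lemma lsum_abs {T} l (f : T -> R) : Rabs (lsum l f) <= lsum l (fun x => Rabs (f x)).
Proof.
  induction l; unfold lsum in *; simpl; [rewrite Rabs_R0; lra|].
  eapply Rle_trans; [apply Rabs_triang|]. lra.
Qed.

Lemma lsum_flat_map {T U} (g : T -> list U) l f :
  lsum (flat_map g l) f = lsum l (fun y => lsum (g y) f).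
Proof. induction l; simpl; [reflexivity|]. rewrite lsum_app, IHl. reflexivity. Qed.

Lemma lsum_rsum {T} l n (f : nat -> T -> R) :
  lsum l (fun x => rsum n (fun j => f j x)) = rsum n (fun j => lsum l (f j)).
Proof.
  induction l.
  - unfold lsum. simpl. rewrite rsum_const. lra.
  - unfold lsum in *. simpl. rewrite IHl, <- rsum_plus. reflexivity.
Qed.

Lemma lsum_configs_S k f :
  lsum (configs (S k)) f = lsum (configs k) (fun y => f (upd y k 1) + f (upd y k (-1))).
Proof. simpl. rewrite lsum_flat_map. apply lsum_ext. intros. unfold lsum; simpl. lra. Qed.

Lemma lsum_configs_flip n j F : (j < n)%nat ->
  lsum (configs n) (fun x => F (upd x j 1) + F (upd x j (-1))) = 2 * lsum (configs n) F.
Proof.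
  revert j F. induction n; intros j F Hj; [lia|].
  rewrite !lsum_configs_S. destruct (Nat.eq_dec j n).
  - subst. rewrite <- lsum_scal_l. apply lsum_ext. intros y _. rewrite !upd_upd. lra.
  - rewrite <- (IHn j (fun z => F (upd z n 1) + F (upd z n (-1)))) by lia.
    apply lsum_ext. intros y _. rewrite !(upd_comm _ j n) by lia. lra.
Qed.

Section SingleSite.
Variable A : coupling.
Variable n : nat.
Hypothesis hA : valid_coupling A.

Lemma rsum_mul_upd f x j s : (j < n)%nat ->
  rsum n (fun l => f l * upd x j s l) = rsum n (fun l => f l * upd x j 0 l) + f j * s.
Proof.
  intros Hj. rewrite <- (rsum_delta n j (fun l => f l * s) Hj), <- rsum_plus.
  apply rsum_ext. intros l _. unfold upd. destruct (Nat.eqb l j); ring.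
Qed.

Lemma mloc_upd x j k s : (j < n)%nat ->
  mloc A n k (upd x j s) = mloc A n k (upd x j 0) + A n k j * s.
Proof. intros Hj. apply rsum_mul_upd, Hj. Qed.

Lemma mloc_upd_self x j s : (j < n)%nat -> mloc A n j (upd x j s) = mloc A n j x.
Proof.
  intros Hj. destruct (hA n j j Hj Hj) as [_ [_ Hjj]].
  rewrite <- (upd_id x j) at 2.
  rewrite (mloc_upd x j j s), (mloc_upd x j j (x j)), Hjj by exact Hj. ring.
Qed.

Lemma mloc_flip x j k : (j < n)%nat ->
  mloc A n k (upd x j 1) - mloc A n k (upd x j (-1)) = 2 * A n k j.
Proof. intros Hj. rewrite (mloc_upd x j k 1), (mloc_upd x j k (-1)) by exact Hj. ring. Qed.

Lemma quad_as_mloc y :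
  rsum n (fun i => rsum n (fun l => A n i l * y i * y l)) = rsum n (fun i => mloc A n i y * y i).
Proof.
  apply rsum_ext. intros i _. unfold mloc. rewrite <- rsum_scal_r.
  apply rsum_ext. intros. ring.
Qed.

Lemma quad_upd x j s : (j < n)%nat ->
  rsum n (fun i => rsum n (fun l => A n i l * upd x j s i * upd x j s l)) =
  rsum n (fun i => rsum n (fun l => A n i l * upd x j 0 i * upd x j 0 l))
  + 2 * s * mloc A n j x.
Proof.
  intros Hj. destruct (hA n j j Hj Hj) as [_ [_ Hjj]].
  rewrite !quad_as_mloc.
  rewrite (rsum_ext n _ (fun i => (mloc A n i (upd x j 0) + A n i j * s) * upd x j s i))
    by (intros; rewrite (mloc_upd x j i s Hj); reflexivity).
  rewrite rsum_mul_upd, Hjj by exact Hj.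
  rewrite (rsum_ext n _ (fun i => mloc A n i (upd x j 0) * upd x j 0 i + s * (A n j i * upd x j 0 i)))
    by (intros i Hi; destruct (hA n i j Hi Hj) as [-> _]; ring).
  rewrite rsum_plus, rsum_scal_l.
  change (rsum n (fun i => A n j i * upd x j 0 i)) with (mloc A n j (upd x j 0)).
  rewrite mloc_upd_self by exact Hj. ring.
Qed.

Lemma weight_upd beta B x j s : (j < n)%nat ->
  weight A n beta B (upd x j s) =
  weight A n beta B (upd x j 0) * exp (s * (beta * mloc A n j x + B)).
Proof.
  intros Hj. unfold weight. rewrite <- exp_plus. f_equal.
  rewrite quad_upd by exact Hj.
  rewrite (rsum_ext n (fun i => upd x j s i) (fun i => 1 * upd x j s i)) by (intros; ring).
  rewrite rsum_mul_upd by exact Hj.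
  rewrite (rsum_ext n (fun i => 1 * upd x j 0 i) (fun i => upd x j 0 i)) by (intros; ring).
  field.
Qed.

Lemma weight_pos beta B x : 0 < weight A n beta B x.
Proof. apply exp_pos. Qed.

(* The conditional mean of [x j] given the other spins. *)
Definition cmean beta B (x : nat -> R) j := tanh (beta * mloc A n j x + B).

Lemma cmean_upd_self beta B x j s : (j < n)%nat -> cmean beta B (upd x j s) j = cmean beta B x j.
Proof. intros Hj. unfold cmean. rewrite mloc_upd_self by exact Hj. reflexivity. Qed.

Lemma spin_sub_cmean_abs beta B x j : spin n x -> (j < n)%nat ->
  Rabs (x j - cmean beta B x j) <= 2.
Proof.
  intros Hs Hj. pose proof (tanh_bound (beta * mloc A n j x + B)).
  unfold cmean. apply Rabs_le. destruct (Hs j Hj) as [-> | ->]; lra.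
Qed.

Lemma lsum_cmean_orth beta B j (G : (nat -> R) -> R) : (j < n)%nat ->
  (forall x s, G (upd x j s) = G x) ->
  lsum (configs n) (fun x => (x j - cmean beta B x j) * G x * weight A n beta B x) = 0.
Proof.
  intros Hj HG.
  set (F := fun x => (x j - cmean beta B x j) * G x * weight A n beta B x).
  assert (2 * lsum (configs n) F = 0); [|lra].
  rewrite <- (lsum_configs_flip n j F Hj), <- (lsum_zero (configs n)).
  apply lsum_ext. intros x _. unfold F. rewrite !upd_eq, !HG, !cmean_upd_self by exact Hj.
  rewrite (weight_upd beta B x j 1), (weight_upd beta B x j (-1)) by exact Hj.
  unfold cmean. set (h := beta * mloc A n j x + B).
  replace (-1 * h) with (-h) by ring. rewrite Rmult_1_l.
  pose proof (tanh_flip h) as Hf.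
  transitivity (G x * weight A n beta B (upd x j 0) *
    ((1 - tanh h) * exp h + (-1 - tanh h) * exp (- h))); [ring|].
  rewrite Hf. ring.
Qed.

(* Subtracting the average [G] of [H] over spin [j] does not change the sum,
   by [lsum_cmean_orth]; what remains is bounded by the discrete derivative. *)
Lemma lsum_cmean_decouple beta B j (H : (nat -> R) -> R) : (j < n)%nat ->
  Rabs (lsum (configs n) (fun x => (x j - cmean beta B x j) * H x * weight A n beta B x)) <=
  lsum (configs n) (fun x => Rabs (H (upd x j 1) - H (upd x j (-1))) * weight A n beta B x).
Proof.
  intros Hj. set (G := fun x => (H (upd x j 1) + H (upd x j (-1))) / 2).
  assert (HG : forall x s, G (upd x j s) = G x) by (intros; unfold G; rewrite !upd_upd; auto).
  pose proof (lsum_cmean_orth beta B j G Hj HG) as H0.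
  replace (lsum (configs n) (fun x => (x j - cmean beta B x j) * H x * weight A n beta B x)) with
    (lsum (configs n) (fun x => (x j - cmean beta B x j) * (H x - G x) * weight A n beta B x)
     + lsum (configs n) (fun x => (x j - cmean beta B x j) * G x * weight A n beta B x))
    by (rewrite <- lsum_plus; apply lsum_ext; intros; ring).
  rewrite H0, Rplus_0_r.
  eapply Rle_trans; [apply lsum_abs|]. apply lsum_le. intros x Hx.
  pose proof (configs_spin n x Hx) as Hs.
  pose proof (weight_pos beta B x) as Hw.
  rewrite !Rabs_mult, (Rabs_right (weight _ _ _ _ x)) by lra.
  apply Rmult_le_compat_r; [lra|].
  pose proof (spin_sub_cmean_abs beta B x j Hs Hj) as E1.
  assert (E2 : Rabs (H x - G x) = Rabs (H (upd x j 1) - H (upd x j (-1))) / 2).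
  { unfold G. set (d := H (upd x j 1) - H (upd x j (-1))).
    rewrite <- (upd_id x j) at 1.
    destruct (Hs j Hj) as [-> | ->]; [|rewrite <- Rabs_Ropp];
      [replace (H (upd x j 1) - _) with (d / 2) by (unfold d; field)
      |replace (- _) with (d / 2) by (unfold d; field)];
      unfold Rdiv; rewrite Rabs_mult, (Rabs_right (/ 2)) by lra; reflexivity. }
  rewrite E2. pose proof (Rabs_pos (H (upd x j 1) - H (upd x j (-1)))).
  apply Rle_trans with (2 * (Rabs (H (upd x j 1) - H (upd x j (-1))) / 2));
    [apply Rmult_le_compat_r; lra|lra].
Qed.

End SingleSite.

Definition score_beta (A : coupling) n x b c :=
  rsum n (fun i => mloc A n i x * (x i - tanh (b * mloc A n i x + c))).
Definition score_B (A : coupling) n x b c :=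
  rsum n (fun i => x i - tanh (b * mloc A n i x + c)).

Definition mloc_centered (A : coupling) n beta B i x :=
  rsum n (fun j => A n i j * (x j - cmean A n beta B x j)).

Section SecondMoment.
Variable A : coupling.
Variable n : nat.
Hypothesis hA : valid_coupling A.
Variables beta B : R.

Let w := weight A n beta B.
Let u := cmean A n beta B.

Lemma Zpart_nonneg : 0 <= Zpart A n beta B.
Proof. apply lsum_nonneg. intros x _. left. apply weight_pos. Qed.

(* Diagonal terms are bounded directly; an off-diagonal term [(j, k)] is
   decoupled in spin [j] by [lsum_cmean_decouple]. *)
Lemma second_moment_le (c : nat -> (nat -> R) -> R) (C : nat -> R) (D : nat -> nat -> R) :
  (forall j x, (j < n)%nat -> spin n x -> Rabs (c j x) <= C j) ->
  (forall j k x, (j < n)%nat -> (k < n)%nat -> j <> k -> spin n x ->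
     Rabs (c j (upd x j 1) * c k (upd x j 1) * (x k - u (upd x j 1) k)
         - c j (upd x j (-1)) * c k (upd x j (-1)) * (x k - u (upd x j (-1)) k))
     <= D j k) ->
  lsum (configs n) (fun x => (rsum n (fun j => c j x * (x j - u x j)))^2 * w x) <=
  Zpart A n beta B * rsum n (fun j => rsum n (fun k => if Nat.eqb j k then 4 * C j ^ 2 else D j k)).
Proof.
  intros HC HD.
  rewrite (lsum_ext _ _ (fun x => rsum n (fun j => rsum n (fun k =>
     (c j x * (x j - u x j)) * (c k x * (x k - u x k)) * w x)))).
  2:{ intros x _. rewrite rsum_sqr, <- rsum_scal_r. apply rsum_ext. intros j _.
      rewrite <- rsum_scal_r. reflexivity. }
  rewrite lsum_rsum, <- rsum_scal_l. apply rsum_le. intros j Hj.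
  rewrite lsum_rsum, <- rsum_scal_l. apply rsum_le. intros k Hk.
  rewrite Rmult_comm. unfold Zpart. rewrite <- lsum_scal_l.
  destruct (Nat.eqb_spec j k).
  - subst k. apply lsum_le. intros x Hx.
    pose proof (configs_spin n x Hx) as Hs. pose proof (weight_pos A n beta B x).
    unfold w. apply Rmult_le_compat_r; [lra|].
    pose proof (spin_sub_cmean_abs A n beta B x j Hs Hj). pose proof (HC j x Hj Hs).
    pose proof (Rabs_pos (c j x)).
    assert (Rabs (c j x * (x j - u x j)) <= C j * 2)
      by (rewrite Rabs_mult; apply Rmult_le_compat; auto using Rabs_pos).
    apply pow2_le_abs in H3. lra.
  - set (H := fun y => c j y * c k y * (y k - u y k)).
    rewrite (lsum_ext _ _ (fun x => (x j - u x j) * H x * w x)) by (intros; unfold H; ring).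
    eapply Rle_trans; [apply Rle_abs|].
    eapply Rle_trans; [apply (lsum_cmean_decouple A n hA beta B j H Hj)|].
    apply lsum_le. intros x Hx. pose proof (configs_spin n x Hx) as Hs.
    apply Rmult_le_compat_r; [left; apply weight_pos|].
    unfold H. rewrite !upd_neq by auto. apply HD; auto.
Qed.

End SecondMoment.

Section Moments.
Variable A : coupling.
Variable n : nat.
Hypothesis hA : valid_coupling A.
Variable gamma : R.
Hypothesis hg : forall i, (i < n)%nat -> rowsum A n i <= gamma.
Variables beta B : R.
Hypothesis hbeta : 0 <= beta.

Let w := weight A n beta B.
Let u := cmean A n beta B.

Lemma coupling_nonneg i j : (i < n)%nat -> (j < n)%nat -> 0 <= A n i j.
Proof. intros. apply hA; auto. Qed.

Lemma colsum_eq_rowsum j : (j < n)%nat -> rsum n (fun i => A n i j) = rowsum A n j.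
Proof. intros. unfold rowsum. apply rsum_ext. intros. apply hA; auto. Qed.

Lemma rowsum_nonneg i : (i < n)%nat -> 0 <= rowsum A n i.
Proof. intros. apply rsum_nonneg. intros. apply coupling_nonneg; auto. Qed.

Lemma gamma_nonneg : (0 < n)%nat -> 0 <= gamma.
Proof. intros Hn. pose proof (rowsum_nonneg 0 Hn). pose proof (hg 0 Hn). lra. Qed.

Lemma mloc_abs_le k x : (k < n)%nat -> spin n x -> Rabs (mloc A n k x) <= gamma.
Proof.
  intros Hk Hs. unfold mloc. eapply Rle_trans; [apply rsum_abs|].
  eapply Rle_trans; [|apply (hg k Hk)]. unfold rowsum. apply rsum_le. intros l Hl.
  rewrite Rabs_mult, (spin_abs n x l Hs Hl), Rabs_right by (apply Rle_ge, coupling_nonneg; auto).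
  lra.
Qed.

Lemma cmean_flip x j k : (j < n)%nat -> (k < n)%nat ->
  Rabs (u (upd x j 1) k - u (upd x j (-1)) k) <= 8 * beta * A n k j.
Proof.
  intros Hj Hk. unfold u, cmean. eapply Rle_trans; [apply tanh_lipschitz|].
  replace (beta * mloc A n k (upd x j 1) + B - (beta * mloc A n k (upd x j (-1)) + B))
    with (beta * (mloc A n k (upd x j 1) - mloc A n k (upd x j (-1)))) by ring.
  rewrite mloc_flip by auto. pose proof (coupling_nonneg k j Hk Hj).
  rewrite Rabs_right by nra. lra.
Qed.

Lemma rsum_offdiag_le (X : nat -> R) (Y : nat -> nat -> R) :
  (forall j k, (j < n)%nat -> (k < n)%nat -> 0 <= Y j k) ->
  rsum n (fun j => rsum n (fun k => if Nat.eqb j k then X j else Y j k)) <=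
  rsum n X + rsum n (fun j => rsum n (fun k => Y j k)).
Proof.
  intros HY. rewrite <- rsum_plus. apply rsum_le. intros j Hj.
  apply Rle_trans with (rsum n (fun k => (if Nat.eqb k j then X j else 0) + Y j k)).
  - apply rsum_le. intros k Hk. rewrite Nat.eqb_sym. specialize (HY j k Hj Hk).
    destruct (Nat.eqb k j); lra.
  - rewrite rsum_plus, (rsum_delta n j (fun _ => X j) Hj). right; reflexivity.
Qed.

Lemma rsum_colsum_le (f : nat -> nat -> R) c : 0 <= c ->
  (forall j k, (j < n)%nat -> (k < n)%nat -> f j k = c * A n k j) ->
  rsum n (fun j => rsum n (fun k => f j k)) <= c * gamma * INR n.
Proof.
  intros Hc Hf. rewrite (rsum_ext n _ (fun j => c * rowsum A n j)).
  2:{ intros j Hj. rewrite (rsum_ext n _ (fun k => c * A n k j)) by auto.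
      rewrite rsum_scal_l, colsum_eq_rowsum; auto. }
  rewrite rsum_scal_l.
  replace (c * gamma * INR n) with (c * rsum n (fun _ => gamma)) by (rewrite rsum_const; ring).
  apply Rmult_le_compat_l; auto. apply rsum_le; auto.
Qed.

(* Each triple [A i j * A i k * A k j] is split by AM-GM into squares whose
   remaining factor sums to a row or column sum. *)
Lemma rsum_triangles_le :
  rsum n (fun i => rsum n (fun j => rsum n (fun k => A n i j * A n i k * A n k j))) <=
  gamma * rsum n (fun i => rsum n (fun j => A n i j ^ 2)).
Proof.
  apply Rle_trans with (rsum n (fun i => rsum n (fun j => rsum n (fun k =>
     A n i j ^ 2 / 2 * A n i k + A n k j ^ 2 / 2 * A n i k)))).
  { apply rsum_le; intros i Hi; apply rsum_le; intros j Hj; apply rsum_le; intros k Hk.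
    pose proof (coupling_nonneg i k Hi Hk).
    assert (0 <= A n i k * (A n i j - A n k j)^2) by (apply Rmult_le_pos; [lra|apply pow2_ge_0]).
    lra. }
  rewrite (rsum_ext n _ (fun i => rsum n (fun j => A n i j ^ 2 / 2 * rowsum A n i)
                             + rsum n (fun j => rsum n (fun k => A n k j ^ 2 / 2 * A n i k)))).
  2:{ intros i Hi. rewrite <- rsum_plus. apply rsum_ext. intros j Hj.
      rewrite rsum_plus, rsum_scal_l. reflexivity. }
  rewrite rsum_plus.
  set (Q := rsum n (fun i => rsum n (fun j => A n i j ^ 2))).
  assert (Hrow : forall i, (i < n)%nat ->
    rsum n (fun j => A n i j ^ 2 / 2 * rowsum A n i) <= gamma / 2 * rsum n (fun j => A n i j ^ 2)).
  { intros i Hi. rewrite <- rsum_scal_l. apply rsum_le. intros j Hj.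
    specialize (hg i Hi). pose proof (pow2_ge_0 (A n i j)). nra. }
  assert (H1 : rsum n (fun i => rsum n (fun j => A n i j ^ 2 / 2 * rowsum A n i)) <= gamma / 2 * Q).
  { unfold Q. rewrite <- rsum_scal_l. apply rsum_le. exact Hrow. }
  assert (H2 : rsum n (fun i => rsum n (fun j => rsum n (fun k => A n k j ^ 2 / 2 * A n i k)))
      <= gamma / 2 * Q).
  { rewrite (rsum_swap n n (fun i j => rsum n (fun k => A n k j ^ 2 / 2 * A n i k))).
    rewrite (rsum_ext n _ (fun j => rsum n (fun k => A n k j ^ 2 / 2 * rowsum A n k))).
    2:{ intros j Hj. rewrite rsum_swap. apply rsum_ext. intros k Hk.
        rewrite rsum_scal_l, colsum_eq_rowsum; auto. }
    rewrite (rsum_swap n n (fun j k => A n k j ^ 2 / 2 * rowsum A n k)).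
    unfold Q. rewrite <- rsum_scal_l. apply rsum_le. exact Hrow. }
  lra.
Qed.

Lemma moment_mloc_centered i : (i < n)%nat ->
  lsum (configs n) (fun x => (mloc_centered A n beta B i x)^2 * w x) <=
  Zpart A n beta B * (4 * rsum n (fun j => A n i j ^ 2) +
      8 * beta * rsum n (fun j => rsum n (fun k => A n i j * A n i k * A n k j))).
Proof.
  intros Hi.
  eapply Rle_trans.
  { apply (second_moment_le A n hA beta B (fun j _ => A n i j) (fun j => A n i j)
       (fun j k => A n i j * A n i k * (8 * beta * A n k j))).
    - intros j x Hj _. rewrite Rabs_right by (apply Rle_ge, coupling_nonneg; auto). lra.
    - intros j k x Hj Hk _ _. fold u.
      replace (A n i j * A n i k * (x k - u (upd x j 1) k) - A n i j * A n i k * (x k - u (upd x j (-1)) k))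
        with (- (A n i j * A n i k) * (u (upd x j 1) k - u (upd x j (-1)) k)) by ring.
      pose proof (coupling_nonneg i j Hi Hj). pose proof (coupling_nonneg i k Hi Hk).
      rewrite Rabs_mult, Rabs_Ropp, (Rabs_right (A n i j * A n i k)) by (apply Rle_ge; nra).
      apply Rmult_le_compat_l; [nra|]. apply cmean_flip; auto. }
  apply Rmult_le_compat_l; [apply Zpart_nonneg|].
  eapply Rle_trans; [apply rsum_offdiag_le|].
  { intros j k Hj Hk. pose proof (coupling_nonneg i j Hi Hj). pose proof (coupling_nonneg i k Hi Hk).
    pose proof (coupling_nonneg k j Hk Hj). apply Rmult_le_pos; [nra|nra]. }
  rewrite rsum_scal_l. apply Rplus_le_compat_l. right.
  rewrite <- rsum_scal_l. apply rsum_ext. intros. rewrite <- rsum_scal_l. apply rsum_ext.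
  intros. ring.
Qed.

Lemma moment_score_B :
  lsum (configs n) (fun x => score_B A n x beta B ^ 2 * w x) <=
  Zpart A n beta B * ((4 + 8 * beta * gamma) * INR n).
Proof.
  rewrite (lsum_ext _ _ (fun x => (rsum n (fun j => 1 * (x j - u x j)))^2 * w x)).
  2:{ intros x _. unfold score_B. do 2 f_equal. apply rsum_ext. intros. unfold u, cmean. ring. }
  eapply Rle_trans.
  { apply (second_moment_le A n hA beta B (fun _ _ => 1) (fun _ => 1) (fun j k => 8 * beta * A n k j)).
    - intros. rewrite Rabs_R1. lra.
    - intros j k x Hj Hk _ _. fold u.
      replace (1 * 1 * (x k - u (upd x j 1) k) - 1 * 1 * (x k - u (upd x j (-1)) k))
        with (- (u (upd x j 1) k - u (upd x j (-1)) k)) by ring.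
      rewrite Rabs_Ropp. apply cmean_flip; auto. }
  apply Rmult_le_compat_l; [apply Zpart_nonneg|].
  eapply Rle_trans; [apply rsum_offdiag_le|].
  { intros j k Hj Hk. pose proof (coupling_nonneg k j Hk Hj). nra. }
  rewrite rsum_const.
  pose proof (rsum_colsum_le (fun j k => 8 * beta * A n k j) (8 * beta) ltac:(lra)
    ltac:(reflexivity)). lra.
Qed.

Lemma moment_score_beta : (0 < n)%nat ->
  lsum (configs n) (fun x => score_beta A n x beta B ^ 2 * w x) <=
  Zpart A n beta B * ((4 * gamma ^ 2 + (4 * gamma + 8 * beta * gamma ^ 2) * gamma) * INR n).
Proof.
  intros Hn. pose proof (gamma_nonneg Hn) as Hg0.
  set (D := 4 * gamma + 8 * beta * gamma ^ 2).
  assert (HD : 0 <= D) by (unfold D; pose proof (pow2_ge_0 gamma); nra).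
  eapply Rle_trans.
  { apply (second_moment_le A n hA beta B (fun j x => mloc A n j x) (fun _ => gamma)
        (fun j k => D * A n k j)).
    - intros. apply mloc_abs_le; auto.
    - intros j k x Hj Hk Hjk Hs. fold u. rewrite !mloc_upd_self by auto.
      set (a := mloc A n j x). set (mp := mloc A n k (upd x j 1)). set (mm := mloc A n k (upd x j (-1))).
      set (up := u (upd x j 1) k). set (um := u (upd x j (-1)) k).
      replace (a * mp * (x k - up) - a * mm * (x k - um)) with
        (a * ((mp - mm) * (x k - up) + mm * (um - up))) by ring.
      assert (Ha : Rabs a <= gamma) by (apply mloc_abs_le; auto).
      assert (Hmm : Rabs mm <= gamma) by (apply mloc_abs_le; auto; apply spin_upd; auto).
      assert (Hd : mp - mm = 2 * A n k j) by (apply mloc_flip; auto).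
      assert (Hu : Rabs (um - up) <= 8 * beta * A n k j)
        by (rewrite Rabs_minus_sym; apply cmean_flip; auto).
      assert (Hx : Rabs (x k - up) <= 2).
      { unfold up. rewrite <- (upd_neq x j k 1) at 1 by auto.
        apply spin_sub_cmean_abs; auto. apply spin_upd; auto. }
      pose proof (coupling_nonneg k j Hk Hj).
      rewrite Rabs_mult. replace (D * A n k j) with
        (gamma * (2 * A n k j * 2 + gamma * (8 * beta * A n k j))) by (unfold D; ring).
      apply Rmult_le_compat; auto using Rabs_pos.
      eapply Rle_trans; [apply Rabs_triang|].
      rewrite !Rabs_mult, Hd, (Rabs_right (2 * A n k j)) by lra.
      apply Rplus_le_compat; [apply Rmult_le_compat_l; lra|].
      apply Rmult_le_compat; auto using Rabs_pos. }
  apply Rmult_le_compat_l; [apply Zpart_nonneg|].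
  eapply Rle_trans; [apply rsum_offdiag_le|].
  { intros j k Hj Hk. pose proof (coupling_nonneg k j Hk Hj). nra. }
  rewrite rsum_const.
  pose proof (rsum_colsum_le (fun j k => D * A n k j) D HD ltac:(reflexivity)). lra.
Qed.

Lemma moment_mean_mloc_centered : (0 < n)%nat ->
  lsum (configs n) (fun x => (rsum n (fun i => mloc_centered A n beta B i x ^ 2) / INR n) * w x) <=
  Zpart A n beta B * ((4 + 8 * beta * gamma) * (rsum n (fun i => rsum n (fun j => A n i j ^ 2)) / INR n)).
Proof.
  intros Hn. assert (HN : 0 < INR n) by (apply lt_0_INR; lia).
  pose proof (gamma_nonneg Hn).
  rewrite (lsum_ext _ _ (fun x => / INR n * rsum n (fun i => mloc_centered A n beta B i x ^ 2 * w x))).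
  2:{ intros x _. rewrite rsum_scal_r. unfold Rdiv. ring. }
  rewrite lsum_scal_l, lsum_rsum.
  eapply Rle_trans.
  { apply Rmult_le_compat_l; [left; apply Rinv_0_lt_compat; lra|].
    apply rsum_le. intros i Hi. apply moment_mloc_centered, Hi. }
  rewrite rsum_scal_l, rsum_plus, !rsum_scal_l.
  pose proof rsum_triangles_le. pose proof (Zpart_nonneg A n beta B).
  set (Q := rsum n (fun i => rsum n (fun j => A n i j ^ 2))) in *.
  set (Tr := rsum n (fun i => rsum n (fun j => rsum n (fun k => A n i j * A n i k * A n k j)))) in *.
  assert (8 * beta * Tr <= 8 * beta * (gamma * Q)) by (apply Rmult_le_compat_l; lra).
  unfold Rdiv. replace (Zpart A n beta B * ((4 + 8 * beta * gamma) * (Q * / INR n))) with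
    (/ INR n * (Zpart A n beta B * (4 * Q + 8 * beta * (gamma * Q)))) by ring.
  apply Rmult_le_compat_l; [left; apply Rinv_0_lt_compat; lra|].
  apply Rmult_le_compat_l; lra.
Qed.

End Moments.

(** * Probabilities of events *)

Section Probability.
Variable A : coupling.
Variable n : nat.
Variables beta B : R.

Lemma Zpart_pos : 0 < Zpart A n beta B.
Proof.
  assert (Hne : configs n <> nil).
  { induction n as [|k IH]; simpl; [discriminate|].
    destruct (configs k); [contradiction|discriminate]. }
  unfold Zpart. destruct (configs n) as [|x l]; [contradiction|].
  unfold lsum. simpl. fold (lsum l (weight A n beta B)).
  pose proof (weight_pos A n beta B x).
  pose proof (lsum_nonneg l (weight A n beta B) (fun y _ => Rlt_le _ _ (weight_pos A n beta B y))).
  lra.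
Qed.

Lemma ind_bounds (P : Prop) : 0 <= ind P <= 1.
Proof. unfold ind. destruct excluded_middle_informative; lra. Qed.

Lemma Prob_sum_le E (f : (nat -> R) -> R) :
  (forall x, spin n x -> ind (E x) <= f x) ->
  Prob A n beta B E <= lsum (configs n) (fun x => f x * weight A n beta B x) / Zpart A n beta B.
Proof.
  intros H. unfold Prob, Rdiv. apply Rmult_le_compat_r; [left; apply Rinv_0_lt_compat, Zpart_pos|].
  apply lsum_le. intros x Hx. apply Rmult_le_compat_r; [left; apply weight_pos|].
  apply H, configs_spin, Hx.
Qed.

Lemma Prob_le E F : (forall x, spin n x -> E x -> F x) -> Prob A n beta B E <= Prob A n beta B F.
Proof.
  intros H. apply Prob_sum_le. intros x Hs. unfold ind.
  destruct (excluded_middle_informative (E x)), (excluded_middle_informative (F x)); try lra.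
  exfalso. auto.
Qed.

Lemma Prob_le_1 E : Prob A n beta B E <= 1.
Proof.
  eapply Rle_trans; [apply (Prob_sum_le E (fun _ => 1)); intros; apply ind_bounds|].
  rewrite (lsum_ext _ _ (weight A n beta B)) by (intros; ring).
  right. apply Rinv_r. pose proof Zpart_pos. lra.
Qed.

Lemma Prob_eq0 E : (forall x, spin n x -> ~ E x) -> Prob A n beta B E = 0.
Proof.
  intros H. unfold Prob. rewrite (lsum_ext _ _ (fun _ => 0)), lsum_zero; [unfold Rdiv; ring|].
  intros x Hx. unfold ind. destruct excluded_middle_informative; [|ring].
  exfalso. eapply H; eauto. apply configs_spin, Hx.
Qed.

Lemma Prob_union3 E E1 E2 E3 : (forall x, spin n x -> E x -> E1 x \/ E2 x \/ E3 x) ->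
  Prob A n beta B E <= Prob A n beta B E1 + Prob A n beta B E2 + Prob A n beta B E3.
Proof.
  intros H.
  eapply Rle_trans; [apply (Prob_sum_le E (fun x => ind (E1 x) + ind (E2 x) + ind (E3 x)))|].
  - intros x Hs. pose proof (ind_bounds (E1 x)). pose proof (ind_bounds (E2 x)).
    pose proof (ind_bounds (E3 x)).
    unfold ind at 1. destruct excluded_middle_informative as [He|He]; [|lra].
    destruct (H x Hs He) as [G|[G|G]]; unfold ind in *;
      [destruct (excluded_middle_informative (E1 x))
      |destruct (excluded_middle_informative (E2 x))
      |destruct (excluded_middle_informative (E3 x))]; try contradiction; lra.
  - right. unfold Prob, Rdiv. rewrite <- !Rmult_plus_distr_r, <- !lsum_plus. f_equal.
    apply lsum_ext. intros. ring.
Qed.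

Lemma Prob_compl E F : (forall x, spin n x -> ~ F x -> E x) ->
  1 - Prob A n beta B F <= Prob A n beta B E.
Proof.
  intros H. pose proof Zpart_pos.
  assert (1 <= Prob A n beta B E + Prob A n beta B F); [|lra].
  unfold Prob, Rdiv. rewrite <- Rmult_plus_distr_r, <- lsum_plus.
  apply Rmult_le_reg_r with (Zpart A n beta B); [lra|].
  rewrite Rmult_assoc, Rinv_l, Rmult_1_r, Rmult_1_l by lra.
  unfold Zpart. apply lsum_le. intros x Hx. pose proof (weight_pos A n beta B x).
  assert (1 <= ind (E x) + ind (F x)); [|nra].
  pose proof (ind_bounds (E x)). pose proof (ind_bounds (F x)).
  unfold ind in *. destruct (excluded_middle_informative (F x)); [lra|].
  destruct excluded_middle_informative; [lra|].
  exfalso. apply n1, H; auto. apply configs_spin, Hx.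
Qed.

Lemma Prob_markov (f : (nat -> R) -> R) t : 0 < t -> (forall x, spin n x -> 0 <= f x) ->
  Prob A n beta B (fun x => t <= f x) <=
  lsum (configs n) (fun x => f x * weight A n beta B x) / (Zpart A n beta B * t).
Proof.
  intros Ht Hf. pose proof Zpart_pos.
  eapply Rle_trans; [apply (Prob_sum_le _ (fun x => f x / t))|].
  - intros x Hs. specialize (Hf x Hs). unfold ind. destruct excluded_middle_informative.
    + apply Rmult_le_reg_r with t; auto. unfold Rdiv. rewrite Rmult_assoc, Rinv_l by lra. lra.
    + apply Rmult_le_pos; auto. left; apply Rinv_0_lt_compat; auto.
  - rewrite (lsum_ext _ _ (fun x => / t * (f x * weight A n beta B x))) by (intros; unfold Rdiv; ring).
    rewrite lsum_scal_l. right. field. lra.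
Qed.

Lemma Prob_chebyshev (G : (nat -> R) -> R) t C : 0 < t ->
  lsum (configs n) (fun x => G x ^ 2 * weight A n beta B x) <= Zpart A n beta B * C ->
  Prob A n beta B (fun x => t < Rabs (G x)) <= C / t^2.
Proof.
  intros Ht HC. pose proof Zpart_pos.
  assert (Ht2 : 0 < t^2) by (apply pow_lt; lra).
  eapply Rle_trans.
  { apply (Prob_le _ (fun x => t^2 <= G x ^ 2)). intros x _ H'.
    rewrite <- (pow2_abs (G x)). apply pow2_le_abs. rewrite Rabs_right; lra. }
  eapply Rle_trans; [apply Prob_markov; auto; intros; apply pow2_ge_0|].
  unfold Rdiv. apply Rle_trans with (Zpart A n beta B * C * / (Zpart A n beta B * t ^ 2)).
  - apply Rmult_le_compat_r; auto. left; apply Rinv_0_lt_compat; nra.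
  - right. field. lra.
Qed.

End Probability.

(** * Bounds on T_n *)

Lemma Tn_le_sq A n gamma x : valid_coupling A ->
  (forall i, (i < n)%nat -> rowsum A n i <= gamma) -> (0 < n)%nat -> spin n x ->
  Tn A n x <= gamma ^ 2.
Proof.
  intros hA hg Hn Hs. assert (HN : 0 < INR n) by (apply lt_0_INR; lia).
  pose proof (gamma_nonneg A n hA gamma hg Hn).
  unfold Tn, mbar. apply Rmult_le_reg_r with (INR n); [lra|].
  unfold Rdiv. rewrite Rmult_assoc, Rinv_l, Rmult_1_r by lra.
  eapply Rle_trans; [apply (rsum_var_le n (fun i => mloc A n i x) 0 Hn)|].
  rewrite Rmult_comm, <- rsum_const. apply rsum_le. intros i Hi.
  rewrite Rminus_0_r. apply pow2_le_abs, (mloc_abs_le A n hA gamma hg); auto.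
Qed.

(* For small [a] the field [beta * a + B] stays near [B <> 0]. *)
Lemma tanh_field_abs_lb beta B gamma a d : 0 < beta -> 0 <= gamma ->
  Rabs a <= Rabs (tanh (beta * a + B)) * gamma + d -> d < 2 * (Rabs B / (6 * beta)) ->
  Rmin (tanh (Rabs B / 2)) (Rabs B / (6 * beta) / (gamma + 1)) <= Rabs (tanh (beta * a + B)).
Proof.
  intros Hb Hg Ha Hd. set (kap := Rabs B / (6 * beta)) in *. set (t := tanh (beta * a + B)) in *.
  pose proof (Rabs_pos t).
  destruct (Rle_dec (kap / (gamma + 1)) (Rabs t)) as [Hk|Hk].
  { eapply Rle_trans; [apply Rmin_r|exact Hk]. }
  eapply Rle_trans; [apply Rmin_l|]. apply tanh_abs_ge; [pose proof (Rabs_pos B); lra|].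
  assert (Hkt : Rabs t * (gamma + 1) < kap).
  { apply Rnot_le_lt in Hk. apply Rmult_lt_compat_r with (r := gamma + 1) in Hk; [|lra].
    unfold Rdiv in Hk. rewrite Rmult_assoc, Rinv_l, Rmult_1_r in Hk by lra. exact Hk. }
  assert (Hba : Rabs (beta * a) <= Rabs B / 2).
  { rewrite Rabs_mult, (Rabs_right beta) by lra.
    replace (Rabs B / 2) with (beta * (3 * kap)) by (unfold kap; field; lra).
    apply Rmult_le_compat_l; lra. }
  pose proof (Rabs_triang_inv B (- (beta * a))). rewrite Rabs_Ropp in H0.
  replace (B - - (beta * a)) with (beta * a + B) in H0 by ring. lra.
Qed.

Lemma Tn_nonneg A n x : (0 < n)%nat -> 0 <= Tn A n x.
Proof.
  intros Hn. apply Rmult_le_pos; [apply rsum_nonneg; intros; apply pow2_ge_0|].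
  left; apply Rinv_0_lt_compat, lt_0_INR; lia.
Qed.

Section FieldDecomposition.
Variable A : coupling.
Variable n : nat.
Hypothesis hA : valid_coupling A.
Variable gamma : R.
Hypothesis hg : forall i, (i < n)%nat -> rowsum A n i <= gamma.
Variables beta B : R.
Hypothesis hbeta : 0 < beta.
Variable x : nat -> R.
Hypothesis hn : (0 < n)%nat.

Let m i := mloc A n i x.
Let a := mbar A n x.
Let t := tanh (beta * a + B).
Let e i := rsum n (fun j => A n i j * (tanh (beta * m j + B) - t)).
Let S i := mloc_centered A n beta B i x.

(* The local field is the common drift [t * R_n(i)] plus two errors: [e i],
   small when [T_n] is small, and [S i], small on average by the moment bound. *)
Lemma mloc_decomposition i : m i = t * rowsum A n i + e i + S i.
Proof.
  unfold e, S, mloc_centered, cmean, rowsum, m, mloc.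
  rewrite <- rsum_scal_l, <- !rsum_plus. apply rsum_ext. intros. ring.
Qed.

Lemma rsum_error_sq_le :
  rsum n (fun i => e i ^ 2) <= 16 * beta^2 * gamma^2 * rsum n (fun j => (m j - a)^2).
Proof.
  pose proof (gamma_nonneg A n hA gamma hg hn) as Hg0.
  assert (Hd : forall j, (tanh (beta * m j + B) - t)^2 <= 16 * beta^2 * (m j - a)^2).
  { intros j. replace (16 * beta ^ 2 * (m j - a) ^ 2) with ((4 * Rabs (beta * (m j - a)))^2)
      by (rewrite Rpow_mult_distr, pow2_abs; ring).
    apply pow2_le_abs. unfold t. eapply Rle_trans; [apply tanh_lipschitz|].
    replace (beta * m j + B - (beta * a + B)) with (beta * (m j - a)) by ring.
    lra. }
  apply Rle_trans with (rsum n (fun i => gamma * rsum n (fun j => A n i j * (16 * beta^2 * (m j - a)^2)))).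
  { apply rsum_le. intros i Hi. unfold e.
    eapply Rle_trans; [apply (rsum_cauchy_schwarz n (fun j => A n i j)
      (fun j => tanh (beta * m j + B) - t)); intros; apply (coupling_nonneg A n hA); auto|].
    apply Rmult_le_compat; [apply (rowsum_nonneg A n hA i Hi)| |apply hg; auto|].
    - apply rsum_nonneg. intros. apply Rmult_le_pos; [apply (coupling_nonneg A n hA); auto|apply pow2_ge_0].
    - apply rsum_le. intros j Hj. apply Rmult_le_compat_l; [apply (coupling_nonneg A n hA); auto|auto]. }
  rewrite rsum_scal_l, rsum_swap.
  rewrite (rsum_ext n _ (fun j => (16 * beta ^ 2 * (m j - a) ^ 2) * rowsum A n j)).
  2:{ intros j Hj. rewrite rsum_scal_r, colsum_eq_rowsum by auto. ring. }
  rewrite <- (rsum_scal_l n (16 * beta ^ 2 * gamma ^ 2)), <- rsum_scal_l.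
  apply rsum_le. intros j Hj. specialize (hg j Hj).
  pose proof (pow2_ge_0 beta). pose proof (pow2_ge_0 (m j - a)).
  replace (gamma * (16 * beta ^ 2 * (m j - a) ^ 2 * rowsum A n j)) with
    ((16 * beta ^ 2 * (m j - a) ^ 2 * gamma) * rowsum A n j) by ring.
  replace (16 * beta ^ 2 * gamma ^ 2 * (m j - a) ^ 2) with
    ((16 * beta ^ 2 * (m j - a) ^ 2 * gamma) * gamma) by ring.
  apply Rmult_le_compat_l; [apply Rmult_le_pos; [nra|lra]|lra].
Qed.

Lemma rowsum_var_le :
  t^2 * rsum n (fun i => (rowsum A n i - rowsum_mean A n)^2) <=
  3 * (rsum n (fun i => (m i - a)^2) + rsum n (fun i => e i ^ 2) + rsum n (fun i => S i ^ 2)).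
Proof.
  rewrite <- rsum_scal_l.
  rewrite (rsum_ext n _ (fun i => (t * rowsum A n i - rsum n (fun k => t * rowsum A n k) / INR n)^2))
    by (intros; rewrite rsum_scal_l; unfold rowsum_mean, Rdiv; ring).
  eapply Rle_trans; [apply (rsum_var_le n (fun i => t * rowsum A n i) a hn)|].
  rewrite <- !rsum_plus, <- rsum_scal_l. apply rsum_le. intros i Hi.
  replace (t * rowsum A n i - a) with ((m i - a) - e i - S i) by (rewrite mloc_decomposition; ring).
  pose proof (pow2_ge_0 (m i - a - e i)). pose proof (pow2_ge_0 (e i - S i)).
  pose proof (pow2_ge_0 (m i - a + S i)). nra.
Qed.

Lemma mbar_decomposition :
  a = t * rowsum_mean A n + rsum n e / INR n + rsum n S / INR n.
Proof.
  assert (0 < INR n) by (apply lt_0_INR; lia).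
  unfold a, mbar, rowsum_mean.
  rewrite (rsum_ext n _ (fun i => t * rowsum A n i + e i + S i))
    by (intros; apply mloc_decomposition).
  rewrite !rsum_plus, rsum_scal_l. field. lra.
Qed.

Lemma rowsum_var_le_Tn :
  t ^ 2 * (rsum n (fun i => (rowsum A n i - rowsum_mean A n)^2) / INR n) <=
  3 * ((1 + 16 * beta^2 * gamma^2) * Tn A n x +
        rsum n (fun i => mloc_centered A n beta B i x ^ 2) / INR n).
Proof.
  assert (HN : 0 < INR n) by (apply lt_0_INR; lia).
  pose proof rowsum_var_le. pose proof rsum_error_sq_le. unfold S in H. cbv beta in H.
  unfold Tn. fold a. unfold Rdiv.
  replace (t ^ 2 * (rsum n (fun i => (rowsum A n i - rowsum_mean A n) ^ 2) * / INR n)) with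
    (t ^ 2 * rsum n (fun i => (rowsum A n i - rowsum_mean A n) ^ 2) * / INR n) by ring.
  replace (3 * ((1 + 16 * beta ^ 2 * gamma ^ 2) * (rsum n (fun i => (mloc A n i x - a) ^ 2) * / INR n) +
     rsum n (fun i => mloc_centered A n beta B i x ^ 2) * / INR n)) with
    (3 * ((1 + 16 * beta ^ 2 * gamma ^ 2) * rsum n (fun i => (m i - a) ^ 2) +
     rsum n (fun i => mloc_centered A n beta B i x ^ 2)) * / INR n) by (unfold m; ring).
  apply Rmult_le_compat_r; [left; apply Rinv_0_lt_compat; lra|lra].
Qed.

Lemma drift_or_noise : B <> 0 ->
  Rmin (tanh (Rabs B / 2)) (Rabs B / (6 * beta) / (gamma + 1)) <= Rabs t \/
  (Rabs B / (6 * beta))^2 <= 16 * beta^2 * gamma^2 * Tn A n x \/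
  (Rabs B / (6 * beta))^2 <= rsum n (fun i => mloc_centered A n beta B i x ^ 2) / INR n.
Proof.
  intros hB. set (kap := Rabs B / (6 * beta)).
  assert (HN : 0 < INR n) by (apply lt_0_INR; lia).
  assert (Hkap : 0 < kap) by (apply Rdiv_lt_0_compat; [apply Rabs_pos_lt|]; lra).
  destruct (Rle_dec (kap^2) (16 * beta^2 * gamma^2 * Tn A n x)) as [|HE]; [tauto|].
  destruct (Rle_dec (kap^2) (rsum n (fun i => S i ^ 2) / INR n)) as [|HS]; [tauto|left].
  assert (He : Rabs (rsum n e / INR n) < kap).
  { apply abs_lt_pow2; [lra|]. eapply Rle_lt_trans; [apply rsum_mean_sqr_le, hn|].
    apply Rle_lt_trans with (16 * beta^2 * gamma^2 * Tn A n x); [|lra].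
    unfold Tn, Rdiv. fold a. rewrite <- Rmult_assoc.
    apply Rmult_le_compat_r; [left; apply Rinv_0_lt_compat; lra|exact rsum_error_sq_le]. }
  assert (HSb : Rabs (rsum n S / INR n) < kap)
    by (apply abs_lt_pow2; [lra|]; eapply Rle_lt_trans; [apply rsum_mean_sqr_le, hn|lra]).
  assert (HR : 0 <= rowsum_mean A n <= gamma).
  { unfold rowsum_mean. split.
    - apply Rmult_le_pos; [apply rsum_nonneg; intros; apply (rowsum_nonneg A n hA); auto|].
      left; apply Rinv_0_lt_compat; lra.
    - apply Rmult_le_reg_r with (INR n); [lra|]. unfold Rdiv.
      rewrite Rmult_assoc, Rinv_l, Rmult_1_r, Rmult_comm, <- rsum_const by lra.
      apply rsum_le, hg. }
  apply (tanh_field_abs_lb beta B gamma a (Rabs (rsum n e / INR n) + Rabs (rsum n S / INR n)));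
    [lra|lra| |fold kap; lra].
  fold t. rewrite mbar_decomposition at 1.
  pose proof (Rabs_pos t).
  assert (Rabs t * rowsum_mean A n <= Rabs t * gamma) by (apply Rmult_le_compat_l; lra).
  eapply Rle_trans; [apply Rabs_triang|]. eapply Rle_trans; [apply Rplus_le_compat_r, Rabs_triang|].
  rewrite Rabs_mult, (Rabs_right (rowsum_mean A n)) by lra. lra.
Qed.

Lemma drift_or_noise_large c : B <> 0 -> 0 <= c ->
  c <= rsum n (fun i => (rowsum A n i - rowsum_mean A n)^2) / INR n ->
  Rmin (tanh (Rabs B / 2)) (Rabs B / (6 * beta) / (gamma + 1)) ^ 2 * c <=
    3 * ((1 + 16 * beta^2 * gamma^2) * Tn A n x +
         rsum n (fun i => mloc_centered A n beta B i x ^ 2) / INR n) \/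
  (Rabs B / (6 * beta))^2 <= (1 + 16 * beta^2 * gamma^2) * Tn A n x \/
  (Rabs B / (6 * beta))^2 <= rsum n (fun i => mloc_centered A n beta B i x ^ 2) / INR n.
Proof.
  intros hB hc Hvar. pose proof (Tn_nonneg A n x hn).
  destruct (drift_or_noise hB) as [Hdrift|[HE|HV]]; [left|right; left; nra|right; right; exact HV].
  eapply Rle_trans; [|apply rowsum_var_le_Tn]. fold t.
  rewrite <- (pow2_abs t). apply Rmult_le_compat; [apply pow2_ge_0|lra| |exact Hvar].
  apply pow2_le_abs. rewrite Rabs_right; [exact Hdrift|].
  pose proof (gamma_nonneg A n hA gamma hg hn). pose proof (Rabs_pos_lt B hB).
  apply Rle_ge, Rmin_glb; left; [apply tanh_pos|repeat apply Rdiv_lt_0_compat]; lra.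
Qed.

End FieldDecomposition.

Lemma Tn_small_forces_noise gamma beta B c : 0 < gamma -> 0 < beta -> B <> 0 -> 0 < c ->
  exists tau0 eta0, 0 < tau0 /\ 0 < eta0 /\
  forall A n x, valid_coupling A -> (forall i, (i < n)%nat -> rowsum A n i <= gamma) ->
    (0 < n)%nat ->
    c <= rsum n (fun i => (rowsum A n i - rowsum_mean A n)^2) / INR n ->
    Tn A n x < tau0 ->
    eta0 <= rsum n (fun i => mloc_centered A n beta B i x ^ 2) / INR n.
Proof.
  intros Hg Hb HB Hc.
  set (kap := Rabs B / (6 * beta)).
  set (t1 := Rmin (tanh (Rabs B / 2)) (kap / (gamma + 1))).
  set (L := 1 + 16 * beta^2 * gamma^2).
  assert (Hkap : 0 < kap) by (apply Rdiv_lt_0_compat; [apply Rabs_pos_lt|]; lra).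
  assert (Ht1 : 0 < t1).
  { apply Rmin_pos; [apply tanh_pos|apply Rdiv_lt_0_compat]; pose proof (Rabs_pos_lt B HB); lra. }
  assert (HL : 1 <= L) by (unfold L; pose proof (pow2_ge_0 (beta * gamma)); nra).
  assert (Hc1 : 0 < t1^2 * c) by (apply Rmult_lt_0_compat; [apply pow_lt|]; lra).
  exists (Rmin (kap^2 / L) (t1^2 * c / (6 * L))), (Rmin (kap^2) (t1^2 * c / 6)).
  split; [apply Rmin_pos; apply Rdiv_lt_0_compat; try apply pow_lt; lra|].
  split; [apply Rmin_pos; [apply pow_lt|]; lra|].
  intros A n x hA hg Hn Hvar HT.
  set (T := Tn A n x) in *.
  set (V := rsum n (fun i => mloc_centered A n beta B i x ^ 2) / INR n).
  assert (HT1 : L * T < kap^2).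
  { apply Rlt_le_trans with (L * (kap^2 / L)); [apply Rmult_lt_compat_l; [lra|]|right; field; lra].
    eapply Rlt_le_trans; [exact HT|apply Rmin_l]. }
  assert (HT2 : 3 * L * T < t1^2 * c / 2).
  { apply Rlt_le_trans with (3 * L * (t1^2 * c / (6 * L)));
      [apply Rmult_lt_compat_l; [lra|]|right; field; lra].
    eapply Rlt_le_trans; [exact HT|apply Rmin_r]. }
  destruct (Rle_dec (Rmin (kap^2) (t1^2 * c / 6)) V) as [|HV]; [assumption|exfalso].
  pose proof (Rmin_l (kap^2) (t1^2 * c / 6)). pose proof (Rmin_r (kap^2) (t1^2 * c / 6)).
  destruct (drift_or_noise_large A n hA gamma hg beta B Hb x Hn c HB ltac:(lra) Hvar) as [Hc'|[Hc'|Hc']];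
    fold kap t1 L T in Hc'; fold V in Hc'; lra.
Qed.

(** * The pseudo-likelihood equations *)

Section Scores.
Variable A : coupling.
Variable n : nat.
Variable x : nat -> R.
Variable gamma : R.
Hypothesis hn : (0 < n)%nat.
Hypothesis hm : forall i, (i < n)%nat -> Rabs (mloc A n i x) <= gamma.

Let m i := mloc A n i x.

Lemma scores_sub_inner b c b' c' :
  (b' - b) * (score_beta A n x b c - score_beta A n x b' c') +
  (c' - c) * (score_B A n x b c - score_B A n x b' c') =
  rsum n (fun i => (tanh (b' * m i + c') - tanh (b * m i + c)) * ((b' * m i + c') - (b * m i + c))).
Proof.
  unfold score_beta, score_B. rewrite <- !rsum_minus, <- !rsum_scal_l, <- rsum_plus.
  apply rsum_ext. intros. unfold m. ring.
Qed.

Lemma rsum_affine_sq_ge al de :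
  al^2 * (INR n * Tn A n x) <= rsum n (fun i => (al * m i + de)^2).
Proof.
  assert (HN : 0 < INR n) by (apply lt_0_INR; lia).
  replace (INR n * Tn A n x) with (rsum n (fun i => (m i - mbar A n x)^2)) by (unfold Tn, m; field; lra).
  pose proof (rsum_var_le n (fun i => al * m i) (- de) hn) as H.
  rewrite (rsum_ext n (fun i => (al * m i + de)^2) (fun i => (al * m i - - de)^2)) by (intros; ring).
  eapply Rle_trans; [|exact H]. rewrite <- rsum_scal_l. right. apply rsum_ext. intros.
  unfold mbar, m. rewrite rsum_scal_l. field. lra.
Qed.

Lemma PL_root_unique b c b' c' : 0 < Tn A n x ->
  PL_root A n x b c -> PL_root A n x b' c' -> b' = b /\ c' = c.
Proof.
  intros HT [H1 H2] [H1' H2'].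
  pose proof (scores_sub_inner b c b' c') as HI. unfold score_beta, score_B in HI.
  rewrite H1, H2, H1', H2' in HI.
  assert (Hy : forall i, (i < n)%nat -> (b' - b) * m i + (c' - c) = 0).
  { intros i Hi.
    assert (Hz : rsum n (fun i => (tanh (b' * m i + c') - tanh (b * m i + c)) *
                                 ((b' * m i + c') - (b * m i + c))) = 0) by (rewrite <- HI; ring).
    apply (rsum_eq0_nonneg n _ (fun i _ => tanh_sub_mul_nonneg _ _) Hz), tanh_sub_mul_eq0 in Hi.
    lra. }
  pose proof (rsum_affine_sq_ge (b' - b) (c' - c)) as H.
  rewrite (rsum_ext n _ (fun _ => 0)), rsum_const in H by (intros i Hi; rewrite Hy; auto; ring).
  assert (HN : 0 < INR n) by (apply lt_0_INR; lia).
  assert (HNT : 0 < INR n * Tn A n x) by (apply Rmult_lt_0_compat; lra).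
  assert (Hsq : (b' - b)^2 <= 0).
  { apply Rmult_le_reg_r with (INR n * Tn A n x); lra. }
  assert (Hb : b' - b = 0) by nra.
  split; [lra|]. specialize (Hy 0%nat hn). rewrite Hb in Hy. lra.
Qed.

Lemma score_B_lipschitz_beta b b' c :
  Rabs (score_B A n x b c - score_B A n x b' c) <= INR n * (4 * gamma * Rabs (b - b')).
Proof.
  unfold score_B. rewrite <- rsum_minus. apply rsum_abs_le. intros i Hi.
  replace (x i - tanh (b * mloc A n i x + c) - (x i - tanh (b' * mloc A n i x + c))) with
    (- (tanh (b * mloc A n i x + c) - tanh (b' * mloc A n i x + c))) by ring.
  rewrite Rabs_Ropp. eapply Rle_trans; [apply tanh_lipschitz|].
  replace (b * mloc A n i x + c - (b' * mloc A n i x + c)) with ((b - b') * mloc A n i x) by ring.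
  rewrite Rabs_mult. pose proof (hm i Hi). pose proof (Rabs_pos (b - b')). nra.
Qed.

Lemma score_B_lipschitz_B b c c' :
  Rabs (score_B A n x b c - score_B A n x b c') <= INR n * (4 * Rabs (c - c')).
Proof.
  unfold score_B. rewrite <- rsum_minus. apply rsum_abs_le. intros i Hi.
  replace (x i - tanh (b * mloc A n i x + c) - (x i - tanh (b * mloc A n i x + c'))) with
    (- (tanh (b * mloc A n i x + c) - tanh (b * mloc A n i x + c'))) by ring.
  rewrite Rabs_Ropp. eapply Rle_trans; [apply tanh_lipschitz|].
  replace (b * mloc A n i x + c - (b * mloc A n i x + c')) with (c - c') by ring. lra.
Qed.

Lemma score_beta_lipschitz b c b' c' :
  Rabs (score_beta A n x b c - score_beta A n x b' c') <=
  INR n * (gamma * (4 * (gamma * Rabs (b - b') + Rabs (c - c')))).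
Proof.
  unfold score_beta. rewrite <- rsum_minus. apply rsum_abs_le. intros i Hi.
  replace (mloc A n i x * (x i - tanh (b * mloc A n i x + c)) -
           mloc A n i x * (x i - tanh (b' * mloc A n i x + c')))
    with (mloc A n i x * (tanh (b' * mloc A n i x + c') - tanh (b * mloc A n i x + c))) by ring.
  rewrite Rabs_mult. apply Rmult_le_compat; auto using Rabs_pos.
  eapply Rle_trans; [apply tanh_lipschitz|]. apply Rmult_le_compat_l; [lra|].
  replace (b' * mloc A n i x + c' - (b * mloc A n i x + c))
    with ((b' - b) * mloc A n i x + (c' - c)) by ring.
  eapply Rle_trans; [apply Rabs_triang|].
  rewrite Rabs_mult, (Rabs_minus_sym b' b), (Rabs_minus_sym c' c).
  pose proof (hm i Hi). pose proof (Rabs_pos (b - b')). nra.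
Qed.

Lemma score_B_decrease K b c c' :
  (forall i, (i < n)%nat -> Rabs (b * mloc A n i x + c) <= K) ->
  (forall i, (i < n)%nat -> Rabs (b * mloc A n i x + c') <= K) -> c <= c' ->
  INR n * (tanh_slope_min K * (c' - c)) <= score_B A n x b c - score_B A n x b c'.
Proof.
  intros H1 H2 Hc. unfold score_B. rewrite <- rsum_minus, <- rsum_const. apply rsum_le.
  intros i Hi.
  pose proof (tanh_slope_le K (b * mloc A n i x + c') (b * mloc A n i x + c) (H2 i Hi) (H1 i Hi)).
  replace (b * mloc A n i x + c' - (b * mloc A n i x + c)) with (c' - c) in H by ring.
  lra.
Qed.

Definition box_radius beta B := (beta + 1) * gamma + Rabs B + 1.

Lemma field_in_box beta B b c i : 0 < beta ->
  Rabs (b - beta) <= 1 -> Rabs (c - B) <= 1 -> (i < n)%nat ->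
  Rabs (b * mloc A n i x + c) <= box_radius beta B.
Proof.
  intros Hb H1 H2 Hi. unfold box_radius. eapply Rle_trans; [apply Rabs_triang|].
  rewrite Rabs_mult. pose proof (hm i Hi). pose proof (Rabs_pos (mloc A n i x)).
  apply Rabs_le_bounds in H1. apply Rabs_le_bounds in H2.
  assert (Rabs b <= beta + 1) by (apply Rabs_le; lra).
  assert (Rabs c <= Rabs B + 1).
  { replace c with ((c - B) + B) by ring. eapply Rle_trans; [apply Rabs_triang|].
    assert (Rabs (c - B) <= 1) by (apply Rabs_le; lra). lra. }
  assert (Rabs b * Rabs (mloc A n i x) <= (beta + 1) * gamma)
    by (apply Rmult_le_compat; auto using Rabs_pos). lra.
Qed.

Lemma scores_strong_monotone beta B b c tau : 0 < beta ->
  Rabs (b - beta) <= 1 -> Rabs (c - B) <= 1 -> tau <= Tn A n x ->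
  tanh_slope_min (box_radius beta B) * (b - beta)^2 * (INR n * tau) <=
  (b - beta) * (score_beta A n x beta B - score_beta A n x b c) +
  (c - B) * (score_B A n x beta B - score_B A n x b c).
Proof.
  intros Hb H1 H2 HT. rewrite scores_sub_inner.
  pose proof (tanh_slope_min_pos (box_radius beta B)). set (s := tanh_slope_min (box_radius beta B)) in *.
  assert (HN : 0 < INR n) by (apply lt_0_INR; lia).
  apply Rle_trans with (rsum n (fun i => s * ((b * m i + c) - (beta * m i + B))^2)).
  2:{ apply rsum_le. intros i Hi. apply tanh_slope_mul; apply field_in_box; auto;
      rewrite ?Rminus_diag, ?Rabs_R0; lra. }
  rewrite rsum_scal_l, (rsum_ext n _ (fun i => ((b - beta) * m i + (c - B))^2)) by (intros; ring).
  pose proof (rsum_affine_sq_ge (b - beta) (c - B)).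
  pose proof (pow2_ge_0 (b - beta)).
  apply Rle_trans with (s * ((b - beta) ^ 2 * (INR n * Tn A n x))); [|apply Rmult_le_compat_l; lra].
  rewrite Rmult_assoc. apply Rmult_le_compat_l; [lra|]. apply Rmult_le_compat_l; [lra|].
  apply Rmult_le_compat_l; lra.
Qed.

End Scores.

Definition clamp lo hi b := Rmax lo (Rmin b hi).

Lemma clamp_bounds lo hi b : lo <= hi -> lo <= clamp lo hi b <= hi.
Proof. intros. unfold clamp, Rmax, Rmin. repeat destruct Rle_dec; lra. Qed.

Lemma clamp_id lo hi b : lo <= b <= hi -> clamp lo hi b = b.
Proof. intros. unfold clamp, Rmax, Rmin. repeat destruct Rle_dec; lra. Qed.

Lemma clamp_lipschitz lo hi b b' : lo <= hi -> Rabs (clamp lo hi b - clamp lo hi b') <= Rabs (b - b').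
Proof.
  intros. unfold clamp, Rmax, Rmin. repeat destruct Rle_dec; unfold Rabs; repeat destruct Rcase_abs; lra.
Qed.

(* Existence of a root near [(beta, B)] when both scores are small there: for
   each [b], [score_B b] has a root [c b] near [B] by monotonicity in [c];
   strong monotonicity of the score map makes [b |-> score_beta b (c b)] change
   sign across [[beta - r, beta + r]]. *)
Section PLExistence.
Variable A : coupling.
Variable n : nat.
Variable x : nat -> R.
Variables gamma beta B tau eps r rho : R.
Hypothesis hn : (0 < n)%nat.
Hypothesis hm : forall i, (i < n)%nat -> Rabs (mloc A n i x) <= gamma.
Hypothesis hgamma : 0 < gamma.
Hypothesis hbeta : 0 < beta.
Hypothesis htau : tau <= Tn A n x.
Hypothesis hscore_beta : Rabs (score_beta A n x beta B) <= INR n * eps.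
Hypothesis hscore_B : Rabs (score_B A n x beta B) <= INR n * eps.
Hypothesis hr : 0 < r <= 1.
Hypothesis hrho : 0 < rho <= 1.

Let s := tanh_slope_min (box_radius gamma beta B).
Hypothesis hrho_large : eps + 4 * gamma * r < s * rho.
Hypothesis hgap : eps * (r + rho) < s * r ^ 2 * tau.

Lemma score_B_decrease_box b c c' : Rabs (b - beta) <= r ->
  Rabs (c - B) <= 1 -> Rabs (c' - B) <= 1 -> c <= c' ->
  INR n * (s * (c' - c)) <= score_B A n x b c - score_B A n x b c'.
Proof.
  intros Hb Hc Hc' Hcc. apply score_B_decrease; auto; intros i Hi; apply field_in_box; auto; lra.
Qed.

Lemma score_B_root b : Rabs (b - beta) <= r ->
  exists c, Rabs (c - B) <= rho /\ score_B A n x b c = 0.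
Proof.
  intros Hb. pose proof (lt_0_INR n ltac:(lia)).
  pose proof (tanh_slope_min_pos (box_radius gamma beta B) : 0 < s).
  assert (HB0 : - (INR n * eps) - INR n * (4 * gamma * r) <= score_B A n x b B
                <= INR n * eps + INR n * (4 * gamma * r)).
  { pose proof (score_B_lipschitz_beta A n x gamma hm b beta B) as Hl.
    apply Rabs_le_bounds in Hl. apply Rabs_le_bounds in hscore_B.
    assert (INR n * (4 * gamma * Rabs (b - beta)) <= INR n * (4 * gamma * r)) by
      (apply Rmult_le_compat_l; [lra|]; apply Rmult_le_compat_l; lra). lra. }
  assert (Hrho1 : Rabs (B + rho - B) <= 1 /\ Rabs (B - rho - B) <= 1 /\ Rabs (B - B) <= 1).
  { replace (B + rho - B) with rho by ring. replace (B - rho - B) with (- rho) by ring.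
    rewrite Rminus_diag, Rabs_Ropp, Rabs_R0, Rabs_right; lra. }
  assert (INR n * (eps + 4 * gamma * r) < INR n * (s * rho)) by (apply Rmult_lt_compat_l; lra).
  assert (Hup : score_B A n x b (B + rho) < 0).
  { pose proof (score_B_decrease_box b B (B + rho) Hb ltac:(tauto) ltac:(tauto) ltac:(lra)).
    replace (B + rho - B) with rho in H2 by ring. lra. }
  assert (Hdown : 0 < score_B A n x b (B - rho)).
  { pose proof (score_B_decrease_box b (B - rho) B Hb ltac:(tauto) ltac:(tauto) ltac:(lra)).
    replace (B - (B - rho)) with rho in H2 by ring. lra. }
  assert (Hcont : continuity (fun c => - score_B A n x b c)).
  { apply (lipschitz_continuity _ (INR n * 4)); [lra|]. intros c c'.
    replace (- score_B A n x b c - - score_B A n x b c')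
      with (score_B A n x b c' - score_B A n x b c) by ring.
    eapply Rle_trans; [apply score_B_lipschitz_B|]. rewrite Rabs_minus_sym. right. ring. }
  destruct (IVT _ (B - rho) (B + rho) Hcont ltac:(lra) ltac:(lra) ltac:(lra)) as [c [Hc1 Hc2]].
  exists c. split; [apply Rabs_le; lra|lra].
Qed.

Lemma score_B_separation b c c' : Rabs (b - beta) <= r ->
  Rabs (c - B) <= 1 -> Rabs (c' - B) <= 1 ->
  INR n * (s * Rabs (c - c')) <= Rabs (score_B A n x b c - score_B A n x b c').
Proof.
  intros Hb Hc Hc'. destruct (Rle_dec c c') as [Hcc|Hcc].
  - replace (Rabs (c - c')) with (c' - c) by (rewrite Rabs_minus_sym; symmetry; apply Rabs_right; lra).
    eapply Rle_trans; [apply (score_B_decrease_box b c c' Hb Hc Hc' Hcc)|apply Rle_abs].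
  - replace (Rabs (c - c')) with (c - c') by (symmetry; apply Rabs_right; lra).
    rewrite Rabs_minus_sym.
    eapply Rle_trans; [apply (score_B_decrease_box b c' c Hb Hc' Hc); lra|apply Rle_abs].
Qed.

Let cl := clamp (beta - r) (beta + r).

Lemma clamp_near b : Rabs (cl b - beta) <= r.
Proof. pose proof (clamp_bounds (beta - r) (beta + r) b ltac:(lra)). apply Rabs_le. unfold cl. lra. Qed.

Let root_B b := epsilon (inhabits 0) (fun c => Rabs (c - B) <= rho /\ score_B A n x (cl b) c = 0).

Lemma root_B_spec b : Rabs (root_B b - B) <= rho /\ score_B A n x (cl b) (root_B b) = 0.
Proof. apply epsilon_spec, score_B_root, clamp_near. Qed.

(* Implicit-function bound: the slope [s] in [c] controls the Lipschitz
   constant [4 gamma] in [b]. *)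
Lemma root_B_lipschitz b b' : Rabs (root_B b - root_B b') <= 4 * gamma / s * Rabs (b - b').
Proof.
  pose proof (lt_0_INR n ltac:(lia)). pose proof (tanh_slope_min_pos (box_radius gamma beta B) : 0 < s).
  destruct (root_B_spec b) as [H1 H2]. destruct (root_B_spec b') as [H1' H2'].
  pose proof (score_B_lipschitz_beta A n x gamma hm (cl b') (cl b) (root_B b)) as Hl.
  rewrite H2, Rminus_0_r in Hl.
  pose proof (score_B_separation (cl b') (root_B b) (root_B b') (clamp_near b')
    ltac:(lra) ltac:(lra)) as Hs.
  rewrite H2', Rminus_0_r in Hs.
  pose proof (clamp_lipschitz (beta - r) (beta + r) b' b ltac:(lra)) as Hc. fold cl in Hc.
  assert (Hle : INR n * (s * Rabs (root_B b - root_B b')) <= INR n * (4 * gamma * Rabs (b' - b))).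
  { eapply Rle_trans; [exact Hs|]. eapply Rle_trans; [exact Hl|].
    apply Rmult_le_compat_l; [lra|]. apply Rmult_le_compat_l; lra. }
  apply Rmult_le_reg_l in Hle; [|lra]. rewrite (Rabs_minus_sym b' b) in Hle.
  apply Rmult_le_reg_l with s; [lra|].
  replace (s * (4 * gamma / s * Rabs (b - b'))) with (4 * gamma * Rabs (b - b')) by (field; lra). lra.
Qed.

Let phi b := score_beta A n x (cl b) (root_B b).

Lemma phi_continuous : continuity (fun b => - phi b).
Proof.
  pose proof (lt_0_INR n ltac:(lia)). pose proof (tanh_slope_min_pos (box_radius gamma beta B) : 0 < s).
  assert (0 <= 4 * gamma / s) by (apply Rmult_le_pos; [lra|left; apply Rinv_0_lt_compat; lra]).
  apply (lipschitz_continuity _ (INR n * (gamma * (4 * (gamma + 4 * gamma / s))))).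
  { apply Rmult_le_pos; [lra|]. apply Rmult_le_pos; lra. }
  intros b b'. replace (- phi b - - phi b') with (- (phi b - phi b')) by ring. rewrite Rabs_Ropp.
  eapply Rle_trans; [apply (score_beta_lipschitz A n x gamma hm)|].
  pose proof (clamp_lipschitz (beta - r) (beta + r) b b' ltac:(lra)) as Hc. fold cl in Hc.
  pose proof (root_B_lipschitz b b'). pose proof (Rabs_pos (b - b')).
  replace (INR n * (gamma * (4 * (gamma + 4 * gamma / s))) * Rabs (b - b')) with
    (INR n * (gamma * (4 * (gamma * Rabs (b - b') + 4 * gamma / s * Rabs (b - b'))))) by ring.
  apply Rmult_le_compat_l; [lra|]. apply Rmult_le_compat_l; [lra|]. apply Rmult_le_compat_l; [lra|].
  apply Rplus_le_compat; [|lra]. apply Rmult_le_compat_l; lra.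
Qed.

Lemma phi_sign (sg : R) : (sg = 1 \/ sg = -1) -> 0 < - sg * phi (beta + sg * r).
Proof.
  intros Hsg. pose proof (lt_0_INR n ltac:(lia)).
  pose proof (tanh_slope_min_pos (box_radius gamma beta B) : 0 < s).
  set (b := beta + sg * r).
  assert (Hcl : cl b = b) by (apply clamp_id; unfold b; destruct Hsg as [-> | ->]; lra).
  destruct (root_B_spec b) as [Hc Hz]. rewrite Hcl in Hz.
  pose proof (scores_strong_monotone A n x gamma hn hm beta B b (root_B b) tau hbeta) as Hm.
  rewrite Hz, Rminus_0_r in Hm. unfold phi in *. rewrite Hcl.
  replace (b - beta) with (sg * r) in Hm by (unfold b; ring).
  replace ((sg * r) ^ 2) with (r ^ 2) in Hm by (destruct Hsg as [-> | ->]; ring).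
  assert (Hrb : Rabs (sg * r) <= 1) by (apply Rabs_le; destruct Hsg as [-> | ->]; lra).
  specialize (Hm Hrb ltac:(lra) htau). fold s in Hm.
  apply Rabs_le_bounds in hscore_beta. apply Rabs_le_bounds in hscore_B.
  assert (Hcg : (root_B b - B) * score_B A n x beta B <= rho * (INR n * eps)).
  { eapply Rle_trans; [apply Rle_abs|]. rewrite Rabs_mult.
    apply Rmult_le_compat; auto using Rabs_pos. apply Rabs_le; lra. }
  assert (Hgap : INR n * (eps * (r + rho)) < INR n * (s * r ^ 2 * tau)) by (apply Rmult_lt_compat_l; lra).
  destruct Hsg as [-> | ->]; nra.
Qed.

Lemma PL_exists_in_box : exists b c, is_PLE A n x b c /\ Rabs (b - beta) <= r /\ Rabs (c - B) <= rho.
Proof.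
  pose proof (phi_sign 1 ltac:(lra)) as Hp. pose proof (phi_sign (-1) ltac:(lra)) as Hm.
  replace (beta + 1 * r) with (beta + r) in Hp by ring.
  replace (beta + -1 * r) with (beta - r) in Hm by ring.
  destruct (IVT (fun b => - phi b) (beta - r) (beta + r) phi_continuous ltac:(lra) ltac:(lra) ltac:(lra))
    as [b [Hb Hphi]].
  assert (Hcl : cl b = b) by (apply clamp_id; lra).
  destruct (root_B_spec b) as [Hc Hz]. rewrite Hcl in Hz.
  assert (Hroot : score_beta A n x b (root_B b) = 0)
    by (cbv beta in Hphi; unfold phi in Hphi; rewrite Hcl in Hphi; lra).
  assert (HT : 0 < Tn A n x).
  { pose proof (tanh_slope_min_pos (box_radius gamma beta B) : 0 < s).
    pose proof (lt_0_INR n ltac:(lia)). pose proof (Rabs_pos (score_B A n x beta B)).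
    assert (0 <= eps) by (apply Rmult_le_reg_l with (INR n); lra).
    assert (0 < s * r ^ 2) by (apply Rmult_lt_0_compat; [lra|apply pow_lt; lra]).
    assert (0 < tau); [|lra].
    apply Rmult_lt_reg_l with (s * r ^ 2); [lra|]. rewrite Rmult_0_r. nra. }
  exists b, (root_B b). split; [split|split; [apply Rabs_le; lra|exact Hc]].
  - split; assumption.
  - intros b' c' Hr'. apply (PL_root_unique A n x hn b (root_B b) b' c' HT); [|exact Hr'].
    split; assumption.
Qed.

End PLExistence.

Lemma gap_factor_exists gamma s tau : 0 < gamma -> 0 < s -> 0 < tau ->
  exists lam, 1 <= lam /\ lam + 2 * (1 + 4 * gamma * lam) / s < s * tau * lam ^ 2.
Proof.
  intros Hg Hs Ht.
  assert (H8 : 0 < 8 * gamma / s) by (apply Rdiv_lt_0_compat; lra).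
  assert (H2 : 0 < 2 / s) by (apply Rdiv_lt_0_compat; lra).
  assert (Hst : 0 < s * tau) by (apply Rmult_lt_0_compat; lra).
  pose proof (Rdiv_lt_0_compat (1 + 8 * gamma / s + 2 / s) (s * tau) ltac:(lra) Hst).
  exists ((1 + 8 * gamma / s + 2 / s) / (s * tau) + 1). split; [lra|].
  set (lam := (1 + 8 * gamma / s + 2 / s) / (s * tau) + 1).
  assert (Hal : s * tau * lam = 1 + 8 * gamma / s + 2 / s + s * tau) by (unfold lam; field; lra).
  replace (s * tau * lam ^ 2) with ((s * tau * lam) * lam) by ring. rewrite Hal.
  replace (2 * (1 + 4 * gamma * lam) / s) with (2 / s + 8 * gamma / s * lam) by (field; lra).
  assert (1 <= lam) by (unfold lam; lra). nra.
Qed.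

Lemma PLE_near_truth gamma beta B tau : 0 < gamma -> 0 < beta -> 0 < tau ->
  exists e0 K0, 0 < e0 /\ forall A n x eps, (0 < n)%nat ->
    (forall i, (i < n)%nat -> Rabs (mloc A n i x) <= gamma) ->
    tau <= Tn A n x -> 0 < eps -> eps <= e0 ->
    Rabs (score_beta A n x beta B) <= INR n * eps ->
    Rabs (score_B A n x beta B) <= INR n * eps ->
    exists b c, is_PLE A n x b c /\ (b - beta)^2 + (c - B)^2 <= K0 * eps^2.
Proof.
  intros Hg Hb Ht.
  set (s := tanh_slope_min (box_radius gamma beta B)).
  assert (Hs : 0 < s) by apply tanh_slope_min_pos.
  destruct (gap_factor_exists gamma s tau Hg Hs Ht) as [lam [Hlam Hlam_gap]].
  set (q := 1 + 4 * gamma * lam) in *. assert (Hq : 1 <= q) by (unfold q; nra).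
  exists (Rmin (1 / lam) (s / (2 * q))), (lam ^ 2 + (2 * q / s) ^ 2).
  split; [apply Rmin_pos; apply Rdiv_lt_0_compat; lra|].
  intros A n x eps Hn Hm HT He He0 HG1 HG2.
  assert (Hr : 0 < lam * eps <= 1).
  { split; [nra|]. pose proof (Rmin_l (1 / lam) (s / (2 * q))).
    apply Rmult_le_reg_r with (/ lam); [apply Rinv_0_lt_compat; lra|].
    replace (lam * eps * / lam) with eps by (field; lra). unfold Rdiv in *. lra. }
  assert (Hrho : 0 < 2 * q * eps / s <= 1).
  { split; [apply Rdiv_lt_0_compat; nra|]. pose proof (Rmin_r (1 / lam) (s / (2 * q))).
    apply Rmult_le_reg_r with s; [lra|]. unfold Rdiv. rewrite Rmult_assoc, Rinv_l by lra.
    apply Rmult_le_reg_r with (/ (2 * q)); [apply Rinv_0_lt_compat; lra|].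
    replace (2 * q * eps * 1 * / (2 * q)) with eps by (field; lra). unfold Rdiv in *. lra. }
  destruct (PL_exists_in_box A n x gamma beta B tau eps (lam * eps) (2 * q * eps / s)
     Hn Hm Hg Hb HT HG1 HG2 Hr Hrho) as [b [c [Hple [Hbb Hcc]]]].
  - fold s. replace (s * (2 * q * eps / s)) with (2 * q * eps) by (field; lra). unfold q. nra.
  - fold s. replace (eps * (lam * eps + 2 * q * eps / s)) with (eps ^ 2 * (lam + 2 * q / s)) by (field; lra).
    replace (s * (lam * eps) ^ 2 * tau) with (eps ^ 2 * (s * tau * lam ^ 2)) by ring.
    apply Rmult_lt_compat_l; [apply pow_lt|]; lra.
  - exists b, c. split; [exact Hple|].
    apply pow2_le_abs in Hbb. apply pow2_le_abs in Hcc.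
    replace ((lam ^ 2 + (2 * q / s) ^ 2) * eps ^ 2) with ((lam * eps) ^ 2 + (2 * q * eps / s) ^ 2)
      by (field; lra). lra.
Qed.

(** * Asymptotics *)

Lemma eventually_INR_ge K : exists N, forall n, (N <= n)%nat -> (0 < n)%nat /\ K < INR n.
Proof.
  destruct (INR_unbounded K) as [N HN]. exists (S N). intros n Hn. split; [lia|].
  apply Rlt_le_trans with (INR N); [lra|]. apply le_INR. lia.
Qed.

Section Asymptotics.
Variable A : coupling.
Hypothesis hA : valid_coupling A.
Variable gamma : R.
Hypothesis hgamma : 0 < gamma.
Hypothesis hg : forall n i, (i < n)%nat -> rowsum A n i <= gamma.
Variables beta B : R.
Hypothesis hbeta : 0 < beta.

Lemma Tn_tight n : (0 < n)%nat -> Prob A n beta B (fun x => gamma ^ 2 < Tn A n x) = 0.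
Proof.
  intros Hn. apply Prob_eq0. intros x Hs H.
  pose proof (Tn_le_sq A n gamma x hA (hg n) Hn Hs). lra.
Qed.

Lemma Prob_noise_ge n eta : (0 < n)%nat -> 0 < eta ->
  Prob A n beta B (fun x => eta <= rsum n (fun i => mloc_centered A n beta B i x ^ 2) / INR n) <=
  (4 + 8 * beta * gamma) * (rsum n (fun i => rsum n (fun j => A n i j ^ 2)) / INR n) / eta.
Proof.
  intros Hn Heta. assert (HN : 0 < INR n) by (apply lt_0_INR; lia).
  pose proof (Zpart_pos A n beta B).
  eapply Rle_trans; [apply Prob_markov; auto|].
  { intros. apply Rmult_le_pos; [apply rsum_nonneg; intros; apply pow2_ge_0|].
    left; apply Rinv_0_lt_compat; lra. }
  eapply Rle_trans.
  { unfold Rdiv at 1. apply Rmult_le_compat_r; [left; apply Rinv_0_lt_compat; nra|].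
    apply (moment_mean_mloc_centered A n hA gamma (hg n) beta B ltac:(lra) Hn). }
  right. field. lra.
Qed.

Lemma Tn_lower_whp : B <> 0 -> mean_field A -> irregular A ->
  exists tau0, 0 < tau0 /\ forall delta, 0 < delta -> exists N, forall n, (N <= n)%nat ->
    Prob A n beta B (fun x => Tn A n x < tau0) < delta.
Proof.
  intros hB hmf [c [Hc [N0 HN0]]].
  destruct (Tn_small_forces_noise gamma beta B c hgamma hbeta hB Hc)
    as [tau0 [eta0 [Ht0 [He0 Hnoise]]]].
  exists tau0. split; [exact Ht0|]. intros delta Hd.
  set (CV := 4 + 8 * beta * gamma).
  assert (HCV : 0 < CV) by (unfold CV; nra).
  destruct (hmf (delta * eta0 / (2 * CV))) as [N1 HN1].
  { apply Rlt_gt, Rdiv_lt_0_compat; [apply Rmult_lt_0_compat|]; lra. }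
  exists (max (max N0 N1) 1). intros n Hn.
  assert (Hn0 : (0 < n)%nat) by lia.
  specialize (HN1 n ltac:(lia)). unfold R_dist in HN1. rewrite Rminus_0_r in HN1.
  apply Rabs_def2 in HN1. destruct HN1 as [HN1 _].
  eapply Rle_lt_trans.
  { apply (Prob_le _ _ _ _ _ (fun x => eta0 <= rsum n (fun i => mloc_centered A n beta B i x ^ 2) / INR n)).
    intros x _ HT. apply (Hnoise A n x hA (hg n) Hn0 (HN0 n ltac:(lia)) HT). }
  eapply Rle_lt_trans; [apply Prob_noise_ge; assumption|]. fold CV.
  apply Rmult_lt_reg_r with eta0; [lra|]. unfold Rdiv at 1. rewrite Rmult_assoc, Rinv_l, Rmult_1_r by lra.
  apply Rlt_le_trans with (CV * (delta * eta0 / (2 * CV))); [apply Rmult_lt_compat_l; lra|].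
  replace (CV * (delta * eta0 / (2 * CV))) with (delta * eta0 / 2) by (field; lra). nra.
Qed.

Let Cs := 4 * gamma ^ 2 + (4 * gamma + 8 * beta * gamma ^ 2) * gamma + (4 + 8 * beta * gamma).

Lemma score_moment_const_pos : 0 < Cs.
Proof.
  assert (0 < gamma ^ 2) by (apply pow_lt; lra).
  assert (0 < beta * gamma ^ 2) by (apply Rmult_lt_0_compat; lra).
  assert (0 < beta * gamma) by (apply Rmult_lt_0_compat; lra).
  assert (0 < (4 * gamma + 8 * beta * gamma ^ 2) * gamma) by (apply Rmult_lt_0_compat; lra).
  unfold Cs. lra.
Qed.

Lemma Prob_scores_large n t : (0 < n)%nat -> 0 < t ->
  Prob A n beta B (fun x => INR n * t < Rabs (score_beta A n x beta B)) +
  Prob A n beta B (fun x => INR n * t < Rabs (score_B A n x beta B)) <= Cs / (INR n * t ^ 2).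
Proof.
  intros Hn Ht. assert (HN : 0 < INR n) by (apply lt_0_INR; lia).
  assert (Hnt : 0 < INR n * t) by (apply Rmult_lt_0_compat; lra).
  pose proof (Prob_chebyshev A n beta B _ _ _ Hnt
    (moment_score_beta A n hA gamma (hg n) beta B ltac:(lra) Hn)).
  pose proof (Prob_chebyshev A n beta B _ _ _ Hnt
    (moment_score_B A n hA gamma (hg n) beta B ltac:(lra))).
  eapply Rle_trans; [apply Rplus_le_compat; eassumption|].
  right. unfold Cs. field. lra.
Qed.

Section GoodEvent.
Variable tau0 : R.
Hypothesis hTn_lower : forall delta, 0 < delta -> exists N, forall n, (N <= n)%nat ->
  Prob A n beta B (fun x => Tn A n x < tau0) < delta.

Lemma Tn_inv_tight : 0 < tau0 -> forall eps, 0 < eps -> exists M, 0 < M /\ exists N, forall n,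
  (N <= n)%nat -> Prob A n beta B (fun x => M * Tn A n x < 1) < eps.
Proof.
  intros Ht0 eps Heps. destruct (hTn_lower eps Heps) as [N HN].
  exists (/ tau0). split; [apply Rinv_0_lt_compat, Ht0|]. exists N. intros n Hn.
  eapply Rle_lt_trans; [|apply (HN n Hn)]. apply Prob_le. intros x _ H.
  apply Rmult_lt_compat_l with (r := tau0) in H; [|exact Ht0].
  rewrite <- Rmult_assoc, Rinv_r, Rmult_1_l, Rmult_1_r in H by lra. exact H.
Qed.

Definition good_sample n t x := tau0 <= Tn A n x /\
  Rabs (score_beta A n x beta B) <= INR n * t /\ Rabs (score_B A n x beta B) <= INR n * t.

Lemma good_sample_whp delta : 0 < delta -> exists K N, 0 < K /\
  forall n t, (N <= n)%nat -> 0 < t -> K <= INR n * t ^ 2 ->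
    Prob A n beta B (fun x => ~ good_sample n t x) < delta.
Proof.
  intros Hd. destruct (hTn_lower (delta / 2) ltac:(lra)) as [N HN].
  pose proof score_moment_const_pos. assert (0 < 2 * Cs / delta) by (apply Rdiv_lt_0_compat; lra).
  exists (2 * Cs / delta + 1), (max N 1). split; [lra|].
  intros n t Hn Ht HK. assert (Hn0 : (0 < n)%nat) by lia.
  assert (HN0 : 0 < INR n) by (apply lt_0_INR; lia).
  eapply Rle_lt_trans.
  { apply (Prob_union3 A n beta B _ (fun x => Tn A n x < tau0)
       (fun x => INR n * t < Rabs (score_beta A n x beta B))
       (fun x => INR n * t < Rabs (score_B A n x beta B))).
    intros x _ Hbad. unfold good_sample in Hbad.
    destruct (Rlt_dec (Tn A n x) tau0); [left; assumption|right].
    destruct (Rlt_dec (INR n * t) (Rabs (score_beta A n x beta B))); [left; assumption|right].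
    destruct (Rlt_dec (INR n * t) (Rabs (score_B A n x beta B))); [assumption|].
    exfalso. apply Hbad. repeat split; lra. }
  pose proof (Prob_scores_large n t Hn0 Ht). specialize (HN n ltac:(lia)).
  assert (Cs / (INR n * t ^ 2) < delta / 2); [|lra].
  apply Rmult_lt_reg_r with (INR n * t ^ 2); [lra|].
  unfold Rdiv at 1. rewrite Rmult_assoc, Rinv_l, Rmult_1_r by lra.
  apply Rlt_le_trans with (delta / 2 * (2 * Cs / delta + 1)); [|apply Rmult_le_compat_l; lra].
  replace (delta / 2 * (2 * Cs / delta + 1)) with (Cs + delta / 2) by (field; lra). lra.
Qed.

Variables e0 K0 : R.
Hypothesis he0 : 0 < e0.
Hypothesis hPLE : forall n x eps, (0 < n)%nat ->
    (forall i, (i < n)%nat -> Rabs (mloc A n i x) <= gamma) ->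
    tau0 <= Tn A n x -> 0 < eps -> eps <= e0 ->
    Rabs (score_beta A n x beta B) <= INR n * eps ->
    Rabs (score_B A n x beta B) <= INR n * eps ->
    exists b c, is_PLE A n x b c /\ (b - beta)^2 + (c - B)^2 <= K0 * eps^2.

Lemma PLE_on_good_sample n t x : (0 < n)%nat -> spin n x -> 0 < t -> t <= e0 ->
  good_sample n t x -> exists b c, is_PLE A n x b c /\ (b - beta)^2 + (c - B)^2 <= K0 * t^2.
Proof.
  intros Hn Hs Ht Hte [HT [H1 H2]].
  apply hPLE; auto. intros i Hi. apply (mloc_abs_le A n hA gamma (hg n)); auto.
Qed.

Lemma PLE_exists_whp : Un_cv (fun n => Prob A n beta B (PLE_exists A n)) 1.
Proof.
  intros eps Heps. destruct (good_sample_whp eps Heps) as [K [N [HK HN]]].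
  destruct (eventually_INR_ge (K / e0 ^ 2)) as [N' HN'].
  exists (max N N'). intros n Hn. destruct (HN' n ltac:(lia)) as [Hn0 HKn].
  assert (He02 : 0 < e0 ^ 2) by (apply pow_lt; lra).
  assert (HKe : K <= INR n * e0 ^ 2).
  { apply Rmult_lt_compat_r with (r := e0 ^ 2) in HKn; [|lra].
    unfold Rdiv in HKn. rewrite Rmult_assoc, Rinv_l, Rmult_1_r in HKn by lra. lra. }
  pose proof (HN n e0 ltac:(lia) he0 HKe).
  pose proof (Prob_le_1 A n beta B (PLE_exists A n)).
  pose proof (Prob_compl A n beta B (PLE_exists A n) (fun x => ~ good_sample n e0 x)).
  assert (1 - Prob A n beta B (fun x => ~ good_sample n e0 x) <= Prob A n beta B (PLE_exists A n)).
  { apply H1. intros x Hs Hg. apply NNPP in Hg.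
    destruct (PLE_on_good_sample n e0 x Hn0 Hs he0 (Rle_refl _) Hg) as [b [c [Hp _]]].
    exists b, c. exact Hp. }
  unfold R_dist. rewrite Rabs_left1 by lra. lra.
Qed.

Lemma PLE_rate : forall eps, 0 < eps -> exists M, exists N, forall n, (N <= n)%nat ->
  Prob A n beta B (fun x => exists b c, is_PLE A n x b c /\
    M / INR n < (b - beta) ^ 2 + (c - B) ^ 2) < eps.
Proof.
  intros eps Heps. destruct (good_sample_whp eps Heps) as [K [N [HK HN]]].
  destruct (eventually_INR_ge (K / e0 ^ 2)) as [N' HN'].
  exists (K0 * K), (max N N'). intros n Hn. destruct (HN' n ltac:(lia)) as [Hn0 HKn].
  assert (HN0 : 0 < INR n) by (apply lt_0_INR; lia).
  set (t := sqrt (K / INR n)).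
  assert (Ht2 : t ^ 2 = K / INR n) by (unfold t; rewrite <- Rsqr_pow2; apply Rsqr_sqrt;
    apply Rlt_le, Rdiv_lt_0_compat; lra).
  assert (Ht : 0 < t) by (apply sqrt_lt_R0, Rdiv_lt_0_compat; lra).
  assert (Hte : t <= e0).
  { assert (He02 : 0 < e0 ^ 2) by (apply pow_lt; lra).
    assert (K / INR n < e0 ^ 2).
    { apply Rmult_lt_reg_r with (INR n); [lra|]. unfold Rdiv. rewrite Rmult_assoc, Rinv_l by lra.
      apply Rmult_lt_compat_r with (r := e0 ^ 2) in HKn; [|lra].
      unfold Rdiv in HKn. rewrite Rmult_assoc, Rinv_l in HKn by lra. lra. }
    destruct (Rle_dec t e0); [assumption|nra]. }
  eapply Rle_lt_trans; [|apply (HN n t ltac:(lia) Ht); rewrite Ht2; right; field; lra].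
  apply Prob_le. intros x Hs [b [c [Hp Hd]]] Hgood.
  destruct (PLE_on_good_sample n t x Hn0 Hs Ht Hte Hgood) as [b' [c' [[Hr' _] Hd']]].
  destruct Hp as [_ Huniq]. destruct (Huniq b' c' Hr') as [-> ->].
  rewrite Ht2 in Hd'. unfold Rdiv in *. lra.
Qed.

End GoodEvent.

End Asymptotics.

Theorem theorem2 (A : coupling)
  (hA : valid_coupling A) (hC1 : cond_C1 A) (hmf : mean_field A)
  (hirr : irregular A) (beta B : R) (hbeta : 0 < beta) (hB : B <> 0) :
  (forall eps, 0 < eps -> exists M, exists N, forall n, (N <= n)%nat ->
      Prob A n beta B (fun x => M < Tn A n x) < eps) /\
  (forall eps, 0 < eps -> exists M, 0 < M /\ exists N, forall n, (N <= n)%nat ->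
      Prob A n beta B (fun x => M * Tn A n x < 1) < eps) /\
  Un_cv (fun n => Prob A n beta B (PLE_exists A n)) 1 /\
  (forall eps, 0 < eps -> exists M, exists N, forall n, (N <= n)%nat ->
      Prob A n beta B (fun x => exists b c, is_PLE A n x b c /\
          M / INR n < (b - beta) ^ 2 + (c - B) ^ 2) < eps).
Proof.
  destruct hC1 as [g0 Hg0].
  set (gamma := Rabs g0 + 1).
  assert (Hgamma : 0 < gamma) by (pose proof (Rabs_pos g0); unfold gamma; lra).
  assert (hg : forall n i, (i < n)%nat -> rowsum A n i <= gamma)
    by (intros n i Hi; specialize (Hg0 n i Hi); pose proof (Rle_abs g0); unfold gamma; lra).
  destruct (Tn_lower_whp A hA gamma Hgamma hg beta B hbeta hB hmf hirr) as [tau0 [Htau0 HT]].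
  destruct (PLE_near_truth gamma beta B tau0 Hgamma hbeta Htau0) as [e0 [K0 [He0 HPLE]]].
  split; [|split; [|split]].
  - intros eps Heps. exists (gamma ^ 2), 1%nat. intros n Hn.
    rewrite (Tn_tight A hA gamma hg beta B n) by lia. exact Heps.
  - exact (Tn_inv_tight A beta B tau0 HT Htau0).
  - exact (PLE_exists_whp A hA gamma Hgamma hg beta B hbeta tau0 HT e0 K0 He0 (HPLE A)).
  - exact (PLE_rate A hA gamma Hgamma hg beta B hbeta tau0 HT e0 K0 He0 (HPLE A)).
Qed.
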